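(* Let $\Gamma,\Delta$ be finite multisets of S4 formulas and $A,B$ S4 formulas. Suppose $\mathcal T_L$ is a G3s proof of $\Gamma\supset\Delta,\Box A,\Box B$ and $\mathcal T_R$ is a G3s proof of $\Gamma\supset\Delta,\Box(A\to B),\Box B$, and let $\mathcal T$ be the G3s + $(\Box\mathrm{Cut})$ proof of $\Gamma\supset\Delta,\Box B$ obtained by combining them with a final $(\Box\mathrm{Cut})$ rule. If $\mathcal T$ is prehistoric-cycle-free (with families and prehistoric relations computed in $\mathcal T$), then there is a prehistoric-cycle-free G3s proof of $\Gamma\supset\Delta,\Box B$.
   Context: S4 formulas: $A ::= \bot \mid P \mid A_0\to A_1 \mid \Box A$ ($P$ atomic). Sequents $\Gamma\supset\Delta$ use finite multisets; $\Box\Gamma:=\{\Box C\mid C\in\Gamma\}$. G3s rules: (Ax) $P,\Gamma\supset\Delta,P$ ($P$ atomic); $(\bot\supset)$ $\bot,\Gamma\supset\Delta$; $(\to\supset)$ from $\Gamma\supset\Delta,A$ and $B,\Gamma\supset\Delta$ infer $A\to B,\Gamma\supset\Delta$; $(\supset\to)$ from $A,\Gamma\supset\Delta,B$ infer $\Gamma\supset\Delta,A\to B$; $(\Box\supset)$ from $A,\Box A,\Gamma\supset\Delta$ infer $\Box A,\Gamma\supset\Delta$; $(\supset\Box)$ from $\Box\Gamma\supset A$ infer $\Gamma',\Box\Gamma\supset\Delta',\Box A$. $(\Box\mathrm{Cut})$: from $\Gamma\supset\Delta,\Box A,\Box B$ and $\Gamma\supset\Delta,\Box(A\to B),\Box B$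 infer $\Gamma\supset\Delta,\Box B$. In a rule instance, formulas of $\Gamma,\Delta,\Box\Gamma$ repeated in premise(s) and conclusion are side formulas; $\Gamma',\Delta'$ (and $\Gamma,\Delta$ in axioms) are weakening formulas; the distinguished new formula of the conclusion is the principal formula and the distinguished formulas of the premises are active formulas. Correspondence between symbol occurrences of a proof tree: a symbol occurrence in a side formula of a premise directly corresponds to the same occurrence in the same side formula of the conclusion; an active formula of a premise directly corresponds to the topmost occurrence of that formula as a subformula of the principal formula, and symbol occurrences inside it directly correspond to the same occurrences inside that subformula; for $(\Box\mathrm{Cut})$: the outermost $\Box$ of $\Box A$, of $\Box(A\to B)$, of the premise occurrences of $\Box B$ and of the conclusion $\Box B$ all correspond; the symbol occurrences of the subformula $A$ in $\Box A$ and in $\Box(A\to B)$ correspond to each other; the symbol occurrences of the subformulas $B$ (in $\Box(A\to B)$ and in the occurrences of $\Box B$) correspond to each other. Correspondence is the reflexive, symmetric, transitive closure of direct correspondence. A family is an equivalence class of $\Box$-occurrences under correspondence. Family $i$ has a prehistoric relation to family $j$, written $i\prec j$, if there is a $(\supset\Box)$ rule whose principal formula $\Box A$ has its outermost $\Box$ in family $j$ and whose premise contains an occurrence of a $\Box$ belonging to family $i$. A prehistoric cycle is a list of families $i_0,\dots,i_{n-1}$ ($n\ge1$) with $i_0\prec\cdots\prec i_{n-1}\prec i_0$; a proof is prehistoric-cycle-free if it has no prehistoric cycle. *)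

From Stdlib Require Import List Arith Relations.
Import ListNotations.

Inductive form : Type :=
| Bot : form
| Var : nat -> form
| Imp : form -> form -> form
| Box : form -> form.

(* A sequent Gamma ⊃ Delta; the multisets are encoded as lists, and the
   list order is made immaterial by the structural exchange rules ExL/ExR
   below, which carry the induced (permutation) correspondence of
   occurrences. *)
Definition seqt : Type := (list form * list form)%type.

Definition swap (i : nat) (L : list form) : list form :=
  firstn i L ++ nth (S i) L Bot :: nth i L Bot :: skipn (S (S i)) L.

Inductive rule : Type :=
| Ax
| BotL
| ImpL
| ImpR
| BoxL
| BoxR : nat -> rule       (* (⊃Box), parameter = |Box Gamma|     *)
| BoxCut : form -> rule
| ExL : nat -> rule
| ExR : nat -> rule.

Inductive ptree : Type :=
| PT : rule -> seqt -> list ptree -> ptree.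

Definition concl (T : ptree) : seqt := match T with PT _ s _ => s end.

(* Conventions: in the conclusion the principal formula is at the head of
   its side; in premises the active formulas are at the head. *)
Definition rule_ok (r : rule) (s : seqt) (ps : list seqt) : Prop :=
  match r with
  | Ax => ps = [] /\ exists p G D, s = (Var p :: G, Var p :: D)
  | BotL => ps = [] /\ exists G D, s = (Bot :: G, D)
  | ImpL => exists a b G D, s = (Imp a b :: G, D) /\
              ps = [(G, a :: D); (b :: G, D)]
  | ImpR => exists a b G D, s = (G, Imp a b :: D) /\ ps = [(a :: G, b :: D)]
  | BoxL => exists a G D, s = (Box a :: G, D) /\ ps = [(a :: Box a :: G, D)]
  | BoxR n => exists G W a D, length G = n /\
              s = (map Box G ++ W, Box a :: D) /\ ps = [(map Box G, [a])]
  | BoxCut a => exists G b D, s = (G, Box b :: D) /\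
              ps = [(G, Box a :: Box b :: D); (G, Box (Imp a b) :: Box b :: D)]
  | ExL i => exists L R, s = (L, R) /\ S i < length L /\ ps = [(swap i L, R)]
  | ExR i => exists L R, s = (L, R) /\ S i < length R /\ ps = [(L, swap i R)]
  end.

Inductive valid : ptree -> Prop :=
| valid_PT : forall r s ts,
    rule_ok r s (map concl ts) -> Forall valid ts -> valid (PT r s ts).

Fixpoint subtree (T : ptree) (a : list nat) : option ptree :=
  match a with
  | [] => Some T
  | k :: a' => match T with
               | PT _ _ ts => match nth_error ts k with
                              | Some T' => subtree T' a'
                              | None => None
                              end
               end
  end.

(* G3s proof (plus exchange): no (Box Cut) rule anywhere *)
Definition cutfree (T : ptree) : Prop :=
  forall a r s ts, subtree T a = Some (PT r s ts) -> forall b, r <> BoxCut b.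

Fixpoint subf (f : form) (p : list nat) : option form :=
  match p with
  | [] => Some f
  | k :: p' => match f, k with
               | Imp a _, 0 => subf a p'
               | Imp _ b, 1 => subf b p'
               | Box a, 0 => subf a p'
               | _, _ => None
               end
  end.

(* A symbol occurrence: node address, side (false = antecedent,
   true = succedent), index in that side, path inside the formula (the
   symbol is the main connective of the subformula at that path). *)
Record occ : Type := Occ { o_addr : list nat; o_side : bool;
                           o_idx : nat; o_path : list nat }.

Definition side (s : seqt) (b : bool) : list form :=
  if b then snd s else fst s.

Definition box_occ (T : ptree) (o : occ) : Prop :=
  exists r s ts f a,
    subtree T (o_addr o) = Some (PT r s ts) /\
    nth_error (side s (o_side o)) (o_idx o) = Some f /\
    subf f (o_path o) = Some (Box a).

Definition loc : Type := (bool * nat * list nat)%type.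
Definition occ_loc (o : occ) : loc := (o_side o, o_idx o, o_path o).

Notation LL := false.
Notation RR := true.

Definition sw (i j : nat) : nat :=
  if Nat.eqb j i then S i else if Nat.eqb j (S i) then i else j.

(* ldc r k x y : the occurrence x in premise k of a rule instance r
   directly corresponds to the occurrence y of its conclusion. *)
Inductive ldc : rule -> nat -> loc -> loc -> Prop :=
| dc_impL_0G : forall i p, ldc ImpL 0 (LL, i, p) (LL, S i, p)
| dc_impL_0A : forall p, ldc ImpL 0 (RR, 0, p) (LL, 0, 0 :: p)
| dc_impL_0D : forall i p, ldc ImpL 0 (RR, S i, p) (RR, i, p)
| dc_impL_1B : forall p, ldc ImpL 1 (LL, 0, p) (LL, 0, 1 :: p)
| dc_impL_1G : forall i p, ldc ImpL 1 (LL, S i, p) (LL, S i, p)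
| dc_impL_1D : forall i p, ldc ImpL 1 (RR, i, p) (RR, i, p)
| dc_impR_A : forall p, ldc ImpR 0 (LL, 0, p) (RR, 0, 0 :: p)
| dc_impR_G : forall i p, ldc ImpR 0 (LL, S i, p) (LL, i, p)
| dc_impR_B : forall p, ldc ImpR 0 (RR, 0, p) (RR, 0, 1 :: p)
| dc_impR_D : forall i p, ldc ImpR 0 (RR, S i, p) (RR, S i, p)
| dc_boxL_A : forall p, ldc BoxL 0 (LL, 0, p) (LL, 0, 0 :: p)
| dc_boxL_BA : forall p, ldc BoxL 0 (LL, 1, p) (LL, 0, p)
| dc_boxL_G : forall i p, ldc BoxL 0 (LL, S (S i), p) (LL, S i, p)
| dc_boxL_D : forall i p, ldc BoxL 0 (RR, i, p) (RR, i, p)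
| dc_boxR_G : forall n i p, i < n -> ldc (BoxR n) 0 (LL, i, p) (LL, i, p)
| dc_boxR_A : forall n p, ldc (BoxR n) 0 (RR, 0, p) (RR, 0, 0 :: p)
| dc_cut_G : forall a k i p, k < 2 -> ldc (BoxCut a) k (LL, i, p) (LL, i, p)
| dc_cut_D : forall a k i p, k < 2 ->
    ldc (BoxCut a) k (RR, S (S i), p) (RR, S i, p)
| dc_cut_BB : forall a k p, k < 2 -> ldc (BoxCut a) k (RR, 1, p) (RR, 0, p)
| dc_cut_box : forall a k, k < 2 -> ldc (BoxCut a) k (RR, 0, []) (RR, 0, [])
| dc_cut_B : forall a p, ldc (BoxCut a) 1 (RR, 0, 0 :: 1 :: p) (RR, 0, 0 :: p)
| dc_exL_L : forall i j p, ldc (ExL i) 0 (LL, j, p) (LL, sw i j, p)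
| dc_exL_R : forall i j p, ldc (ExL i) 0 (RR, j, p) (RR, j, p)
| dc_exR_L : forall i j p, ldc (ExR i) 0 (LL, j, p) (LL, j, p)
| dc_exR_R : forall i j p, ldc (ExR i) 0 (RR, j, p) (RR, sw i j, p).

Definition dcorr (T : ptree) (o o' : occ) : Prop :=
  box_occ T o /\ box_occ T o' /\
  exists a r s ts, subtree T a = Some (PT r s ts) /\
  ( (exists k, o_addr o = a ++ [k] /\ o_addr o' = a /\
               ldc r k (occ_loc o) (occ_loc o'))
    \/
    (* (Box Cut): the subformula A of Box A (premise 0) and of Box(A->B)
       (premise 1) correspond *)
    (exists c p, r = BoxCut c /\ o_addr o = a ++ [0] /\ o_addr o' = a ++ [1] /\
                 occ_loc o = (RR, 0, 0 :: p) /\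
                 occ_loc o' = (RR, 0, 0 :: 0 :: p)) ).

(* correspondence: reflexive-symmetric-transitive closure;
   families are its equivalence classes (of Box occurrences) *)
Definition corr (T : ptree) : relation occ :=
  clos_refl_sym_trans occ (dcorr T).

(* prec T o1 o2 : the family of o1 is prehistoric to the family of o2 *)
Definition prec (T : ptree) (o1 o2 : occ) : Prop :=
  exists a n s ts p,
    subtree T a = Some (PT (BoxR n) s ts) /\
    box_occ T p /\ o_addr p = a ++ [0] /\
    corr T o1 p /\ corr T o2 (Occ a RR 0 []).

Definition pcfree (T : ptree) : Prop :=
  ~ exists o, box_occ T o /\ clos_trans occ (prec T) o o.

(* Label every Box occurrence of the given proof [T] by its family,
   and order families by the transitive closure of the prehistoric relation.
   Because [T] is prehistoric-cycle-free this order is strict.  We then work in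
   a labelled sequent calculus [der] in which a (⊃Box) rule introducing a box
   with label [h] requires every label occurring in its premise to be strictly
   below [h].  In this calculus:
   - the two premises of the final (Box Cut) become labelled derivations of
     Γ ⊃ Box_f A, Box_f B, Δ and Γ ⊃ Box_f (A -> B), Box_f B, Δ (all three boxes
     of the cut lie in one family f);
   - the ordinary cut rule is admissible (induction on the cut formula, then on
     the derivations), provided the label order is transitive;
   - hence the labelled (Box Cut) is admissible, giving a labelled derivation of
     Γ ⊃ Box_f B, Δ;
   - erasing the labels of any labelled derivation yields a valid cut-free G3s
     proof tree whose prehistoric relation strictly increases labels, so it has
     no prehistoric cycle when the label order is irreflexive. *)

From Stdlib Require Import List Arith Lia Permutation Relations ClassicalEpsilon
  FunctionalExtensionality PropExtensionality.
Import ListNotations.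

(* Formulas whose boxes carry labels from [L]; multisets of them are lists up
   to permutation, compared through multiplicities. *)
Section Multisets.
Variable L : Type.

Inductive lform : Type :=
| LBot : lform
| LVar : nat -> lform
| LImp : lform -> lform -> lform
| LBox : L -> lform -> lform.

(* Labels range over an arbitrary type, so equality is decided classically. *)
Definition lform_eq_dec (x y : lform) : {x = y} + {x <> y} :=
  excluded_middle_informative (x = y).

Fixpoint mult (x : lform) (l : list lform) : nat :=
  match l with
  | [] => 0
  | y :: l => (if lform_eq_dec y x then 1 else 0) + mult x l
  end.

Lemma mult_nil x : mult x [] = 0.
Proof. reflexivity. Qed.

Lemma mult_cons x y l : mult x (y :: l) = (if lform_eq_dec y x then 1 else 0) + mult x l.
Proof. reflexivity. Qed.

Lemma mult_app x l1 l2 : mult x (l1 ++ l2) = mult x l1 + mult x l2.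
Proof. induction l1; simpl; auto. rewrite IHl1. lia. Qed.

Lemma mult_in x l : In x l <-> mult x l > 0.
Proof.
  induction l as [|y l IH]; simpl; [split; [tauto|lia]|].
  destruct (lform_eq_dec y x); split; intros H; try lia.
  - left; auto.
  - destruct H; [congruence|]. apply IH in H. lia.
  - right; apply IH; lia.
Qed.

Lemma in_split_perm (x : lform) (l : list lform) : In x l -> exists r, Permutation l (x :: r).
Proof.
  intros H. apply in_split in H. destruct H as [l1 [l2 ->]].
  exists (l1 ++ l2). apply Permutation_sym, Permutation_middle.
Qed.

Lemma perm_iff_mult (l1 l2 : list lform) : Permutation l1 l2 <-> forall x, mult x l1 = mult x l2.
Proof.
  split.
  - induction 1; intros; simpl; auto; try lia. rewrite IHPermutation1; auto.
  - revert l2; induction l1 as [|a l1 IH]; intros l2 H.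
    + destruct l2 as [|y l2]; auto. specialize (H y). simpl in H.
      destruct (lform_eq_dec y y); [lia|congruence].
    + assert (Ha : In a l2).
      { apply mult_in. rewrite <- H. simpl. destruct (lform_eq_dec a a); [lia|congruence]. }
      destruct (in_split_perm _ _ Ha) as [r Hr].
      apply Permutation_trans with (a :: r); [|apply Permutation_sym; auto].
      constructor. apply IH. intros x. specialize (H x).
      assert (E : mult x l2 = mult x (a :: r)).
      { clear -Hr. induction Hr; simpl; auto; lia. }
      rewrite E in H. simpl in H. lia.
Qed.

Lemma perm_mult (l1 l2 : list lform) : Permutation l1 l2 -> forall x, mult x l1 = mult x l2.
Proof. apply perm_iff_mult. Qed.

Definition msub (l1 l2 : list lform) : Prop := forall x, mult x l1 <= mult x l2.

Fixpoint rem1 (x : lform) (l : list lform) : list lform :=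
  match l with
  | [] => []
  | y :: l => if lform_eq_dec y x then l else y :: rem1 x l
  end.

Lemma mult_rem1 x y l :
  mult y (rem1 x l) = mult y l - (if lform_eq_dec x y then (if Nat.ltb 0 (mult y l) then 1 else 0) else 0).
Proof.
  induction l as [|a l IH]; simpl; [destruct (lform_eq_dec x y); auto|].
  destruct (lform_eq_dec a x); subst.
  - destruct (lform_eq_dec x y); simpl; lia.
  - simpl. rewrite IH. destruct (lform_eq_dec a y), (lform_eq_dec x y); subst; try congruence;
      destruct (mult y l); simpl; lia.
Qed.

Fixpoint mdiff (l2 l1 : list lform) : list lform :=
  match l1 with
  | [] => l2
  | x :: l1 => mdiff (rem1 x l2) l1
  end.

Lemma mult_mdiff l1 : forall l2 y, mult y (mdiff l2 l1) = mult y l2 - mult y l1.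
Proof.
  induction l1 as [|a l1 IH]; intros; simpl; [lia|].
  rewrite IH, mult_rem1. destruct (lform_eq_dec a y); simpl; try lia.
  destruct (mult y l2); simpl; lia.
Qed.

Lemma in_mdiff (x : lform) (l2 l1 : list lform) : In x (mdiff l2 l1) -> In x l2.
Proof. rewrite !mult_in, mult_mdiff. lia. Qed.

Lemma msub_perm (l1 l2 : list lform) : msub l1 l2 -> Permutation l2 (l1 ++ mdiff l2 l1).
Proof.
  intros H. apply perm_iff_mult. intros x. rewrite mult_app, mult_mdiff. specialize (H x). lia.
Qed.

Lemma msub_in (x : lform) (l1 l2 : list lform) : msub l1 l2 -> In x l1 -> exists r, Permutation l2 (x :: r).
Proof.
  intros H1 H2. apply in_split_perm. apply mult_in. apply mult_in in H2. specialize (H1 x). lia.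
Qed.

Lemma msub_refl (l : list lform) : msub l l.
Proof. intro; lia. Qed.

End Multisets.

Arguments LBot {L}.
Arguments LVar {L}.
Arguments LImp {L}.
Arguments LBox {L}.
Arguments mult {L}.
Arguments msub {L}.
Arguments lform_eq_dec {L}.
Arguments mdiff {L}.
Arguments msub_in {L}.

(* Decision procedure for goals [Permutation _ _] and [msub _ _] that follow
   from the hypotheses of that form by linear arithmetic on multiplicities. *)
Ltac mult_prep z :=
  repeat match goal with
  | H : Permutation _ _ |- _ => pose proof (perm_mult _ _ _ H z); revert H
  | H : msub _ _ |- _ => pose proof (H z); revert H
  end; intros;
  repeat rewrite ?mult_app, ?mult_cons, ?mult_nil, ?mult_mdiff in *;
  repeat match goal with
  | |- context [if lform_eq_dec ?y ?x then 1 else 0] =>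
      let v := fresh "v" in set (v := if lform_eq_dec y x then 1 else 0) in *; clearbody v
  | H : context [if lform_eq_dec ?y ?x then 1 else 0] |- _ =>
      let v := fresh "v" in set (v := if lform_eq_dec y x then 1 else 0) in *; clearbody v
  end.

Ltac msolve :=
  match goal with
  | |- Permutation _ _ => apply perm_iff_mult; let z := fresh "z" in intro z; mult_prep z; lia
  | |- msub _ _ => let z := fresh "z" in intro z; mult_prep z; lia
  end.

(* The labelled sequent calculus: G3s on multisets of labelled formulas, where
   (⊃Box) introducing a box labelled [h] demands that every label occurring in
   its premise be [R]-below [h]. *)
Section LabelledCalculus.
Variable L : Type.
Variable R : L -> L -> Prop.

Definition is_box (f : lform L) : Prop := match f with LBox _ _ => True | _ => False end.

Fixpoint labels (f : lform L) : list L :=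
  match f with
  | LImp a b => labels a ++ labels b
  | LBox l a => l :: labels a
  | _ => []
  end.

(* Sequents are taken up to permutation through the rule [d_perm]; in
   [d_boxR], [S] is the boxed context kept in the premise and [W] is weakened. *)
Inductive der : list (lform L) -> list (lform L) -> Prop :=
| d_perm G D G' D' : der G D -> Permutation G G' -> Permutation D D' -> der G' D'
| d_ax p G D : der (LVar p :: G) (LVar p :: D)
| d_bot G D : der (LBot :: G) D
| d_impL a b G D : der G (a :: D) -> der (b :: G) D -> der (LImp a b :: G) D
| d_impR a b G D : der (a :: G) (b :: D) -> der G (LImp a b :: D)
| d_boxL l a G D : der (a :: LBox l a :: G) D -> der (LBox l a :: G) D
| d_boxR S W h a D : der S [a] -> Forall is_box S ->
    (forall x, In x (flat_map labels S ++ labels a) -> R x h) ->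
    der (S ++ W) (LBox h a :: D).

Ltac reorder H := eapply d_perm; [exact H | msolve | msolve].

Lemma weak_app G D : der G D -> forall X Y, der (G ++ X) (D ++ Y).
Proof.
  induction 1; intros X Y; simpl.
  - eapply d_perm; [apply IHder|apply Permutation_app_tail; auto|apply Permutation_app_tail; auto].
  - apply d_ax.
  - apply d_bot.
  - apply d_impL; [apply IHder1|apply IHder2].
  - apply d_impR; apply IHder.
  - apply d_boxL; apply IHder.
  - rewrite <- app_assoc. apply d_boxR; auto.
Qed.

Lemma weakening G D G' D' : der G D -> msub G G' -> msub D D' -> der G' D'.
Proof.
  intros H H1 H2. apply msub_perm in H1. apply msub_perm in H2.
  eapply d_perm; [apply weak_app; exact H| apply Permutation_sym; eauto| apply Permutation_sym; eauto].
Qed.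

Lemma perm_cons_cases (x y : lform L) l l' : Permutation (x :: l) (y :: l') ->
  (x = y /\ Permutation l l') \/
  (exists l1, Permutation l (y :: l1) /\ Permutation l' (x :: l1)).
Proof.
  intros H. destruct (lform_eq_dec x y) as [E|NE].
  - left. subst. split; auto. eapply Permutation_cons_inv; eauto.
  - right. assert (In y l).
    { assert (In y (x :: l)) by (apply Permutation_in with (y :: l'); [apply Permutation_sym; auto|left; auto]).
      destruct H0; [congruence|auto]. }
    destruct (in_split_perm _ _ _ H0) as [l1 Hl1]. exists l1. split; auto. msolve.
Qed.

Lemma mult_boxed x S : Forall is_box S -> ~ is_box x -> mult x S = 0.
Proof.
  induction 1; intros; simpl; auto. rewrite IHForall; auto.
  destruct (lform_eq_dec x0 x); subst; tauto.
Qed.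

Lemma boxR_split S W (x : lform L) G0 : Permutation (S ++ W) (x :: G0) -> Forall is_box S -> ~ is_box x ->
  exists W1, Permutation W (x :: W1) /\ Permutation G0 (S ++ W1).
Proof.
  intros HP HS Hx.
  assert (In x W).
  { apply mult_in. pose proof (perm_mult _ _ _ HP x). rewrite mult_app, (mult_boxed _ _ HS Hx) in H.
    simpl in H. destruct (lform_eq_dec x x); [lia|congruence]. }
  destruct (in_split_perm _ _ _ H) as [W1 HW1]. exists W1. split; auto. msolve.
Qed.

Lemma inv_impL G D : der G D -> forall a b G0, Permutation G (LImp a b :: G0) ->
  der G0 (a :: D) /\ der (b :: G0) D.
Proof.
  induction 1; intros a0 b0 G0 HP.
  - destruct (IHder a0 b0 G0 (perm_trans H0 HP)) as [H3 H4]. split; [reorder H3|reorder H4].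
  - destruct (perm_cons_cases _ _ _ _ HP) as [[E _]|[l1 [H1 H2]]]; [discriminate|].
    split; [pose proof (d_ax p l1 (a0 :: D)) as X; reorder X|pose proof (d_ax p (b0::l1) D) as X; reorder X].
  - destruct (perm_cons_cases _ _ _ _ HP) as [[E _]|[l1 [H1 H2]]]; [discriminate|].
    split; [pose proof (d_bot l1 (a0 :: D)) as X; reorder X|pose proof (d_bot (b0::l1) D) as X; reorder X].
  - destruct (perm_cons_cases _ _ _ _ HP) as [[E H1]|[l1 [H1 H2]]].
    + inversion E; subst. split; [reorder H|reorder H0].
    + destruct (IHder1 a0 b0 l1 H1) as [X1 X2].
      destruct (IHder2 a0 b0 (b :: l1) ltac:(msolve)) as [X3 X4].
      split.
      * assert (Y : der l1 (a :: a0 :: D)) by reorder X1.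
        pose proof (d_impL _ _ _ _ Y X3) as X. reorder X.
      * assert (Y : der (b :: b0 :: l1) D) by reorder X4.
        pose proof (d_impL _ _ (b0 :: l1) _ X2 Y) as X. reorder X.
  - destruct (IHder a0 b0 (a :: G0) ltac:(msolve)) as [X1 X2]. split.
    + assert (Y : der (a :: G0) (b :: a0 :: D)) by reorder X1.
      pose proof (d_impR _ _ _ _ Y) as X. reorder X.
    + assert (Y : der (a :: b0 :: G0) (b :: D)) by reorder X2.
      pose proof (d_impR _ _ _ _ Y) as X. reorder X.
  - destruct (perm_cons_cases _ _ _ _ HP) as [[E _]|[l1 [H1 H2]]]; [discriminate|].
    destruct (IHder a0 b0 (a :: LBox l a :: l1) ltac:(msolve)) as [X1 X2]. split.
    + pose proof (d_boxL _ _ _ _ X1) as X. reorder X.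
    + assert (Y : der (a :: LBox l a :: b0 :: l1) D) by reorder X2.
      pose proof (d_boxL _ _ _ _ Y) as X. reorder X.
  - destruct (boxR_split _ _ _ _ HP H0 ltac:(simpl; auto)) as [W1 [H2 H3]]. split.
    + pose proof (d_boxR S W1 h a (a0 :: D) H H0 H1) as X. reorder X.
    + pose proof (d_boxR S (b0 :: W1) h a D H H0 H1) as X. reorder X.
Qed.

Lemma inv_impR G D : der G D -> forall a b D0, Permutation D (LImp a b :: D0) ->
  der (a :: G) (b :: D0).
Proof.
  induction 1; intros a0 b0 D0 HP.
  - pose proof (IHder a0 b0 D0 (perm_trans H1 HP)) as X. reorder X.
  - destruct (perm_cons_cases _ _ _ _ HP) as [[E _]|[l1 [H1 H2]]]; [discriminate|].
    pose proof (d_ax p (a0 :: G) (b0 :: l1)) as X; reorder X.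
  - pose proof (d_bot (a0 :: G) (b0 :: D0)) as X; reorder X.
  - pose proof (IHder1 a0 b0 (a :: D0) ltac:(msolve)) as X1.
    pose proof (IHder2 a0 b0 D0 HP) as X2.
    assert (Y1 : der (a0 :: G) (a :: b0 :: D0)) by reorder X1.
    assert (Y2 : der (b :: a0 :: G) (b0 :: D0)) by reorder X2.
    pose proof (d_impL _ _ _ _ Y1 Y2) as X. reorder X.
  - destruct (perm_cons_cases _ _ _ _ HP) as [[E H1]|[l1 [H1 H2]]].
    + inversion E; subst. reorder H.
    + pose proof (IHder a0 b0 (b :: l1) ltac:(msolve)) as X1.
      assert (Y : der (a :: a0 :: G) (b :: b0 :: l1)) by reorder X1.
      pose proof (d_impR _ _ _ _ Y) as X. reorder X.
  - pose proof (IHder a0 b0 D0 HP) as X1.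
    assert (Y : der (a :: LBox l a :: a0 :: G) (b0 :: D0)) by reorder X1.
    pose proof (d_boxL _ _ _ _ Y) as X. reorder X.
  - destruct (perm_cons_cases _ _ _ _ HP) as [[E _]|[l1 [H2 H3]]]; [discriminate|].
    pose proof (d_boxR S (a0 :: W) h a (b0 :: l1) H H0 H1) as X. reorder X.
Qed.

Lemma inv_boxR G D : der G D -> forall h c D0, Permutation D (LBox h c :: D0) ->
  der G (c :: D0).
Proof.
  induction 1; intros h0 c0 D0 HP.
  - pose proof (IHder h0 c0 D0 (perm_trans H1 HP)) as X. reorder X.
  - destruct (perm_cons_cases _ _ _ _ HP) as [[E _]|[l1 [H1 H2]]]; [discriminate|].
    pose proof (d_ax p G (c0 :: l1)) as X; reorder X.
  - apply d_bot.
  - pose proof (IHder1 h0 c0 (a :: D0) ltac:(msolve)) as X1.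
    pose proof (IHder2 h0 c0 D0 HP) as X2.
    assert (Y1 : der G (a :: c0 :: D0)) by reorder X1.
    pose proof (d_impL _ _ _ _ Y1 X2) as X. reorder X.
  - destruct (perm_cons_cases _ _ _ _ HP) as [[E H1]|[l1 [H1 H2]]]; [discriminate|].
    pose proof (IHder h0 c0 (b :: l1) ltac:(msolve)) as X1.
    assert (Y : der (a :: G) (b :: c0 :: l1)) by reorder X1.
    pose proof (d_impR _ _ _ _ Y) as X. reorder X.
  - pose proof (IHder h0 c0 D0 HP) as X1.
    apply d_boxL; auto.
  - destruct (perm_cons_cases _ _ _ _ HP) as [[E H2]|[l1 [H2 H3]]].
    + inversion E; subst. eapply weakening; [exact H| |]; msolve.
    + pose proof (d_boxR S W h a (c0 :: l1) H H0 H1) as X. reorder X.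
Qed.

Lemma rm_bot_r G D : der G D -> forall D0, Permutation D (LBot :: D0) -> der G D0.
Proof.
  induction 1; intros D0 HP.
  - pose proof (IHder D0 (perm_trans H1 HP)) as X. reorder X.
  - destruct (perm_cons_cases _ _ _ _ HP) as [[E _]|[l1 [H1 H2]]]; [discriminate|].
    pose proof (d_ax p G l1) as X; reorder X.
  - apply d_bot.
  - pose proof (IHder1 (a :: D0) ltac:(msolve)) as X1.
    pose proof (IHder2 D0 HP) as X2.
    apply d_impL; auto.
  - destruct (perm_cons_cases _ _ _ _ HP) as [[E H1]|[l1 [H1 H2]]]; [discriminate|].
    pose proof (IHder (b :: l1) ltac:(msolve)) as X1.
    pose proof (d_impR _ _ _ _ X1) as X. reorder X.
  - apply d_boxL; auto.
  - destruct (perm_cons_cases _ _ _ _ HP) as [[E H2]|[l1 [H2 H3]]]; [discriminate|].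
    pose proof (d_boxR S W h a l1 H H0 H1) as X. reorder X.
Qed.

Lemma rm_atom_r G D : der G D -> forall p D0, Permutation D (LVar p :: D0) -> In (LVar p) D0 -> der G D0.
Proof.
  induction 1; intros p0 D0 HP HI.
  - pose proof (IHder p0 D0 (perm_trans H1 HP) HI) as X. reorder X.
  - destruct (perm_cons_cases _ _ _ _ HP) as [[E H1]|[l1 [H1 H2]]].
    + inversion E; subst. destruct (in_split_perm _ _ _ HI) as [r Hr].
      pose proof (d_ax p0 G r) as X; reorder X.
    + pose proof (d_ax p G l1) as X; reorder X.
  - apply d_bot.
  - pose proof (IHder1 p0 (a :: D0) ltac:(msolve) ltac:(right; auto)) as X1.
    pose proof (IHder2 p0 D0 HP HI) as X2.
    apply d_impL; auto.
  - destruct (perm_cons_cases _ _ _ _ HP) as [[E H1]|[l1 [H1 H2]]]; [discriminate|].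
    assert (In (LVar p0) (b :: l1)).
    { apply (Permutation_in _ H2) in HI. destruct HI; [discriminate|right; auto]. }
    pose proof (IHder p0 (b :: l1) ltac:(msolve) H0) as X1.
    pose proof (d_impR _ _ _ _ X1) as X. reorder X.
  - apply d_boxL; eauto.
  - destruct (perm_cons_cases _ _ _ _ HP) as [[E H2]|[l1 [H2 H3]]]; [discriminate|].
    pose proof (d_boxR S W h a l1 H H0 H1) as X. reorder X.
Qed.

End LabelledCalculus.

Section CutAdmissibility.
Variable L : Type.
Variable R : L -> L -> Prop.
Hypothesis R_trans : forall x y z, R x y -> R y z -> R x z.

Notation der := (der L R).
Ltac reorder H := eapply d_perm; [exact H | msolve | msolve].

Lemma msub_boxed_perm S W (x : lform L) G0 : Permutation (S ++ W) (x :: G0) ->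
  Forall (is_box L) S -> ~ is_box L x -> msub S G0.
Proof.
  intros HP HS Hx z. pose proof (perm_mult _ _ _ HP z) as E. rewrite mult_app, mult_cons in E.
  destruct (lform_eq_dec x z); [subst; rewrite (mult_boxed _ _ _ HS Hx)|]; lia.
Qed.

Lemma msub_boxed_cons S (x : lform L) G0 : msub S (x :: G0) ->
  Forall (is_box L) S -> ~ is_box L x -> msub S G0.
Proof.
  intros HP HS Hx z. specialize (HP z). rewrite mult_cons in HP.
  destruct (lform_eq_dec x z); [subst; rewrite (mult_boxed _ _ _ HS Hx)|]; lia.
Qed.

Lemma in_perm_cons (x y : lform L) l l' : Permutation l (y :: l') -> In x l -> x <> y -> In x l'.
Proof.
  intros HP HI HN. apply (Permutation_in _ HP) in HI. destruct HI; [congruence|auto].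
Qed.

(* Cut on an atom, by induction on the derivation in which it is on the left;
   the contexts are generalised to sub-multisets to absorb contraction. *)
Lemma cut_atom p : forall X Y, der X Y -> forall G0, Permutation X (LVar p :: G0) ->
  forall G D, msub G0 G -> msub Y D -> der G (LVar p :: D) -> der G D.
Proof.
  induction 1; intros G0 HP G1 D1 S1 S2 T1.
  - eapply IHder; eauto. eapply perm_trans; eauto. msolve.
  - destruct (perm_cons_cases _ _ _ _ _ HP) as [[E H1]|[l1 [H1 H2]]].
    + inversion E; subst. eapply rm_atom_r; [exact T1| apply Permutation_refl|].
      apply mult_in. specialize (S2 (LVar p)). simpl in S2. destruct (lform_eq_dec (LVar p) (LVar p)); [lia|congruence].
    + destruct (msub_in (LVar p0) G0 G1) as [g Hg]; auto. apply (Permutation_in _ (Permutation_sym H2)); left; auto.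
      destruct (msub_in (LVar p0) (LVar p0 :: D) D1) as [d Hd]; auto. left; auto.
      pose proof (d_ax L R p0 g d) as X; reorder X.
  - destruct (perm_cons_cases _ _ _ _ _ HP) as [[E H1]|[l1 [H1 H2]]]; [discriminate|].
    destruct (msub_in LBot G0 G1) as [g Hg]; auto. apply (Permutation_in _ (Permutation_sym H2)); left; auto.
    pose proof (d_bot L R g D1) as X; reorder X.
  - destruct (perm_cons_cases _ _ _ _ _ HP) as [[E H1]|[l1 [H1 H2]]]; [discriminate|].
    destruct (msub_in (LImp a b) G0 G1) as [g Hg]; auto. apply (Permutation_in _ (Permutation_sym H2)); left; auto.
    destruct (inv_impL _ _ _ _ T1 a b g Hg) as [X1 X2].
    assert (Y1 : der g (a :: D1)).
    { eapply IHder1; [exact H1| | |]; [msolve|msolve|reorder X1]. }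
    assert (Y2 : der (b :: g) D1).
    { eapply IHder2 with (G0 := b :: l1); [msolve|msolve|msolve|exact X2]. }
    pose proof (d_impL _ _ _ _ _ _ Y1 Y2) as X. reorder X.
  - destruct (msub_in (LImp a b) (LImp a b :: D) D1) as [d Hd]; auto. left; auto.
    assert (X1 : der (a :: G1) (b :: LVar p :: d)).
    { eapply inv_impR; [exact T1|]. msolve. }
    assert (Y : der (a :: G1) (b :: d)).
    { eapply IHder with (G0 := a :: G0); [msolve|msolve|msolve|reorder X1]. }
    pose proof (d_impR _ _ _ _ _ _ Y) as X. reorder X.
  - destruct (perm_cons_cases _ _ _ _ _ HP) as [[E H1]|[l1 [H1 H2]]]; [discriminate|].
    destruct (msub_in (LBox l a) G0 G1) as [g Hg]; auto. apply (Permutation_in _ (Permutation_sym H2)); left; auto.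
    assert (Y : der (a :: LBox l a :: g) D1).
    { eapply IHder with (G0 := a :: LBox l a :: l1); [msolve|msolve|msolve|].
      eapply weakening; [exact T1|msolve|msolve]. }
    pose proof (d_boxL _ _ _ _ _ _ Y) as X. reorder X.
  - assert (SS : msub S G1).
    { intro z. pose proof (msub_boxed_perm _ _ _ _ HP H0 ltac:(simpl; auto) z). specialize (S1 z). lia. }
    destruct (msub_in (LBox h a) (LBox h a :: D) D1) as [d Hd]; auto. left; auto.
    pose proof (d_boxR L R S (mdiff G1 S) h a d H H0 H1) as X.
    eapply d_perm; [exact X| |apply Permutation_sym; auto]. apply Permutation_sym, msub_perm; auto.
Qed.

(* Let [Box_h c] occur on the right of [X ⊃ Y]
   next to [Box_k e], with [Sx ⊆ X] boxed and labelled below [k].  If every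
   (⊃Box) premise [S2 ⊃ c] that could introduce [Box_h c] can be turned into
   [S2, Sx ⊃ e], then [Box_h c] can be dropped: where it is introduced we
   introduce [Box_k e] instead. *)
Section DropPrincipalBox.
Variables (h k : L) (c e : lform L) (Sx : list (lform L)).
Hypothesis Sx_boxed : Forall (is_box L) Sx.
Hypothesis Sx_below : forall x, In x (flat_map (labels L) Sx) -> R x k.
Hypothesis e_labels : forall x, In x (labels L e) -> In x (labels L c) \/ R x k.
Hypothesis below_h_below_k : forall x, R x h -> R x k.
Hypothesis premise_step : forall S2, der S2 [c] -> Forall (is_box L) S2 ->
  (forall x, In x (flat_map (labels L) S2 ++ labels L c) -> R x h) ->
  der (S2 ++ mdiff Sx S2) [e].

Lemma replace_principal_box S2 W D : der S2 [c] -> Forall (is_box L) S2 ->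
  (forall x, In x (flat_map (labels L) S2 ++ labels L c) -> R x h) ->
  msub Sx (S2 ++ W) -> In (LBox k e) D -> der (S2 ++ W) D.
Proof.
  intros T2 B2 R2 SX HI.
  set (Z := S2 ++ mdiff Sx S2).
  assert (BZ : Forall (is_box L) Z).
  { apply Forall_app. split; auto. rewrite Forall_forall in *.
    intros x Hx. apply Sx_boxed. eapply in_mdiff; eauto. }
  assert (RZ : forall x, In x (flat_map (labels L) Z ++ labels L e) -> R x k).
  { intros x Hx. apply in_app_or in Hx. destruct Hx as [Hx|Hx].
    - apply in_flat_map in Hx. destruct Hx as [y [Hy Hx]]. apply in_app_or in Hy.
      destruct Hy as [Hy|Hy].
      + apply below_h_below_k, R2, in_or_app. left. apply in_flat_map. eauto.
      + apply Sx_below, in_flat_map. exists y. split; auto. eapply in_mdiff; eauto.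
    - destruct (e_labels x Hx) as [Hc|]; auto.
      apply below_h_below_k, R2, in_or_app; auto. }
  destruct (in_split_perm _ _ _ HI) as [y Hy].
  pose proof (d_boxR L R Z (mdiff (S2 ++ W) Z) k e y (premise_step S2 T2 B2 R2) BZ RZ) as X.
  eapply d_perm; [exact X| |apply Permutation_sym; auto].
  apply Permutation_sym, msub_perm. unfold Z. intro z. specialize (SX z).
  rewrite !mult_app, mult_mdiff in *. lia.
Qed.

Lemma drop_principal_box : forall X Y, der X Y -> forall Y0, Permutation Y (LBox h c :: Y0) ->
  msub Sx X -> In (LBox k e) Y0 -> der X Y0.
Proof.
  induction 1 as [? ? ? ? ? IHa| | |? ? ? ? ? IHa ? IHb|? ? ? ? ? IHa|? ? ? ? ? IHa|S2 W h0 a D T2 _ B2 R2];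
    intros Y0 HQ SX HI.
  - pose proof (IHa Y0 (perm_trans H1 HQ) ltac:(msolve) HI) as X. reorder X.
  - destruct (perm_cons_cases _ _ _ _ _ HQ) as [[E _]|[l1 [H3 H4]]]; [discriminate|].
    pose proof (d_ax L R p G l1) as X; reorder X.
  - apply d_bot.
  - assert (SG : msub Sx G) by (eapply msub_boxed_cons; eauto; simpl; auto).
    apply d_impL.
    + apply IHa; [msolve|auto|right; auto].
    + apply IHb; [auto| |auto]. intro z. specialize (SG z). rewrite mult_cons. lia.
  - destruct (perm_cons_cases _ _ _ _ _ HQ) as [[E _]|[l1 [H3 H4]]]; [discriminate|].
    assert (Y : der (a :: G) (b :: l1)).
    { apply IHa; [msolve|msolve|]. right. eapply in_perm_cons; eauto. discriminate. }
    pose proof (d_impR _ _ _ _ _ _ Y) as X. reorder X.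
  - apply d_boxL. apply IHa; auto. msolve.
  - destruct (perm_cons_cases _ _ _ _ _ HQ) as [[E _]|[l1 [_ H6]]].
    + inversion E; subst. eapply replace_principal_box; eauto.
    + pose proof (d_boxR L R S2 W h0 a l1 T2 B2 R2) as X. reorder X.
Qed.

End DropPrincipalBox.

Section BoxCase.
Variable h : L.
Variable c : lform L.
Hypothesis IHc : forall G D, der G (c :: D) -> der (c :: G) D -> der G D.

Lemma cut_box_boxR S W k e D G0 G1 D1 :
  der S [e] -> Forall (is_box L) S -> (forall x, In x (flat_map (labels L) S ++ labels L e) -> R x k) ->
  (forall G0', Permutation S (LBox h c :: G0') ->
     forall G D, msub G0' G -> msub [e] D -> der G (LBox h c :: D) -> der G D) ->
  Permutation (S ++ W) (LBox h c :: G0) -> msub G0 G1 -> msub (LBox k e :: D) D1 ->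
  der G1 (LBox h c :: D1) -> der G1 D1.
Proof.
  intros Te S_boxed S_below IH_premise HP S1 S2 T1.
  destruct (msub_in (LBox k e) (LBox k e :: D) D1) as [d Hd]; auto. left; auto.
  destruct (mult (LBox h c) S) as [|m] eqn:Hm.
  - (* the cut formula is weakened away by this (⊃Box) rule *)
    assert (SS : msub S G1).
    { intro z. pose proof (perm_mult _ _ _ HP z) as E. specialize (S1 z).
      rewrite mult_app, mult_cons in E. destruct (lform_eq_dec (LBox h c) z); [subst|]; lia. }
    pose proof (d_boxR L R S (mdiff G1 S) k e d Te S_boxed S_below) as X.
    eapply d_perm; [exact X| |apply Permutation_sym; auto]. apply Permutation_sym, msub_perm; auto.
  - (* the cut formula is in the boxed context: the left derivation must
       introduce it, and there [Box_k e] is introduced instead *)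
    destruct (in_split_perm _ (LBox h c) S) as [S1' HS1]. { apply mult_in; lia. }
    assert (SS1 : msub S1' G1).
    { intro z. pose proof (perm_mult _ _ _ HP z). pose proof (perm_mult _ _ _ HS1 z). specialize (S1 z).
      rewrite mult_app, mult_cons in *. lia. }
    assert (In_S : forall y, In y S1' -> In y S).
    { intros y Hy. apply (Permutation_in _ (Permutation_sym HS1)). right; auto. }
    assert (below_k : forall x y, In y S -> In x (labels L y) -> R x k).
    { intros x y Hy Hx. apply S_below. apply in_or_app. left. apply in_flat_map. eauto. }
    assert (hk : R h k).
    { apply (below_k h (LBox h c)); [|left; auto].
      apply (Permutation_in _ (Permutation_sym HS1)). left; auto. }
    apply (drop_principal_box h k c e S1') with (Y := LBox h c :: D1); auto.
    + rewrite Forall_forall in *. auto.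
    + intros x Hx. apply in_flat_map in Hx. destruct Hx as [y [Hy Hx]]. eauto.
    + intros x Hx. right. apply S_below, in_or_app. auto.
    + intros x Hx. eauto.
    + intros S3 T3 B3 R3. apply (IH_premise S1' HS1 (S3 ++ mdiff S1' S3) [e]); [msolve|msolve|].
      apply d_boxR; auto.
    + apply (Permutation_in _ (Permutation_sym Hd)). left; auto.
Qed.

Lemma cut_box_gen : forall X Y, der X Y -> forall G0, Permutation X (LBox h c :: G0) ->
  forall G D, msub G0 G -> msub Y D -> der G (LBox h c :: D) -> der G D.
Proof.
  induction 1; intros G0 HP G1 D1 S1 S2 T1.
  - eapply IHder; eauto. eapply perm_trans; eauto. msolve.
  - destruct (perm_cons_cases _ _ _ _ _ HP) as [[E H1]|[l1 [H1 H2]]]; [discriminate|].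
    destruct (msub_in (LVar p) G0 G1) as [g Hg]; auto. apply (Permutation_in _ (Permutation_sym H2)); left; auto.
    destruct (msub_in (LVar p) (LVar p :: D) D1) as [d Hd]; auto. left; auto.
    pose proof (d_ax L R p g d) as X; reorder X.
  - destruct (perm_cons_cases _ _ _ _ _ HP) as [[E H1]|[l1 [H1 H2]]]; [discriminate|].
    destruct (msub_in LBot G0 G1) as [g Hg]; auto. apply (Permutation_in _ (Permutation_sym H2)); left; auto.
    pose proof (d_bot L R g D1) as X; reorder X.
  - destruct (perm_cons_cases _ _ _ _ _ HP) as [[E H1]|[l1 [H1 H2]]]; [discriminate|].
    destruct (msub_in (LImp a b) G0 G1) as [g Hg]; auto. apply (Permutation_in _ (Permutation_sym H2)); left; auto.
    destruct (inv_impL _ _ _ _ T1 a b g Hg) as [X1 X2].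
    assert (Y1 : der g (a :: D1)).
    { eapply IHder1; [exact H1| | |]; [msolve|msolve|reorder X1]. }
    assert (Y2 : der (b :: g) D1).
    { eapply IHder2 with (G0 := b :: l1); [msolve|msolve|msolve|exact X2]. }
    pose proof (d_impL _ _ _ _ _ _ Y1 Y2) as X. reorder X.
  - destruct (msub_in (LImp a b) (LImp a b :: D) D1) as [d Hd]; auto. left; auto.
    assert (X1 : der (a :: G1) (b :: LBox h c :: d)).
    { eapply inv_impR; [exact T1|]. msolve. }
    assert (Y : der (a :: G1) (b :: d)).
    { eapply IHder with (G0 := a :: G0); [msolve|msolve|msolve|reorder X1]. }
    pose proof (d_impR _ _ _ _ _ _ Y) as X. reorder X.
  - destruct (perm_cons_cases _ _ _ _ _ HP) as [[E H1]|[l1 [H1 H2]]].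
    + inversion E; subst.
      assert (Y : der (c :: G1) D1).
      { eapply IHder with (G0 := c :: G); [msolve|msolve|msolve|].
        eapply weakening; [exact T1|msolve|msolve]. }
      assert (Y2 : der G1 (c :: D1)) by (eapply inv_boxR; [exact T1|apply Permutation_refl]).
      apply IHc; auto.
    + destruct (msub_in (LBox l a) G0 G1) as [g Hg]; auto. apply (Permutation_in _ (Permutation_sym H2)); left; auto.
      assert (Y : der (a :: LBox l a :: g) D1).
      { eapply IHder with (G0 := a :: LBox l a :: l1); [msolve|msolve|msolve|].
        eapply weakening; [exact T1|msolve|msolve]. }
      pose proof (d_boxL _ _ _ _ _ _ Y) as X. reorder X.
  - eapply cut_box_boxR; eauto.
Qed.

End BoxCase.

Lemma cut (C : lform L) : forall G D, der G (C :: D) -> der (C :: G) D -> der G D.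
Proof.
  induction C as [|n|C1 IH1 C2 IH2|l C IHC]; intros G D T1 T2.
  - eapply rm_bot_r; [exact T1|apply Permutation_refl].
  - eapply (cut_atom n _ _ T2 G (Permutation_refl _) G D); auto using msub_refl.
  - pose proof (inv_impR _ _ _ _ T1 C1 C2 D (Permutation_refl _)) as X1.
    destruct (inv_impL _ _ _ _ T2 C1 C2 G (Permutation_refl _)) as [X2 X3].
    apply IH2; auto. apply IH1; auto. eapply weakening; [exact X2|msolve|msolve].
  - eapply (cut_box_gen l C IHC _ _ T2 G (Permutation_refl _) G D); auto using msub_refl.
Qed.

(* (Box Cut) is admissible: follow the derivation of the premise with [Box_f A];
   where it is introduced from a boxed [S ⊃ A], the box [Box_f (A -> B)] of
   the other premise is dropped in favour of [Box_f B], its (⊃Box) premise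
   [S2 ⊃ A -> B] being turned into [S2, S ⊃ B] by a cut on [A]. *)
Section BoxCut.
Variable f : L.
Variables A B : lform L.

Lemma boxcut_reduce : forall X Y, der X Y -> forall Y0, Permutation Y (LBox f A :: Y0) -> In (LBox f B) Y0 ->
  der X (LBox f (LImp A B) :: Y0) -> der X Y0.
Proof.
  induction 1 as [? ? ? ? ? IHa| | |? ? ? ? ? IHa ? IHb|? ? ? ? ? IHa|? ? ? ? ? IHa|S W h a D TS IHa S_boxed S_below];
    intros Y0 HQ HI TR.
  - assert (TR' : der G (LBox f (LImp A B) :: Y0)) by reorder TR.
    pose proof (IHa Y0 (perm_trans H1 HQ) HI TR') as X. reorder X.
  - destruct (perm_cons_cases _ _ _ _ _ HQ) as [[E _]|[l1 [H3 H4]]]; [discriminate|].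
    pose proof (d_ax L R p G l1) as X; reorder X.
  - apply d_bot.
  - destruct (inv_impL _ _ _ _ TR a b G (Permutation_refl _)) as [X1 X2].
    apply d_impL.
    + apply IHa; [msolve|right; auto|reorder X1].
    + apply IHb; auto.
  - destruct (perm_cons_cases _ _ _ _ _ HQ) as [[E _]|[l1 [H3 H4]]]; [discriminate|].
    assert (X1 : der (a :: G) (b :: LBox f (LImp A B) :: l1)).
    { eapply inv_impR; [exact TR|]. msolve. }
    assert (Y : der (a :: G) (b :: l1)).
    { apply IHa; [msolve| |reorder X1]. right. eapply in_perm_cons; eauto. discriminate. }
    pose proof (d_impR _ _ _ _ _ _ Y) as X. reorder X.
  - apply d_boxL. apply IHa; auto. eapply weakening; [exact TR|msolve|msolve].
  - destruct (perm_cons_cases _ _ _ _ _ HQ) as [[E H5]|[l1 [H5 H6]]].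
    + inversion E; subst.
      apply (drop_principal_box f f (LImp A B) B S) with (Y := LBox f (LImp A B) :: Y0); auto.
      * intros x Hx. apply S_below, in_or_app. auto.
      * intros x Hx. left. simpl. apply in_or_app. auto.
      * intros S2 T2 B2 R2. apply (cut A).
        -- eapply weakening; [exact TS|msolve|msolve].
        -- eapply weakening; [exact (inv_impR _ _ _ _ T2 A B [] (Permutation_refl _))|msolve|msolve].
      * msolve.
    + pose proof (d_boxR L R S W h a l1 TS S_boxed S_below) as X. reorder X.
Qed.

End BoxCut.

Theorem boxcut_adm f A B G D :
  der G (LBox f A :: LBox f B :: D) -> der G (LBox f (LImp A B) :: LBox f B :: D) ->
  der G (LBox f B :: D).
Proof.
  intros T1 T2. eapply boxcut_reduce; [exact T1|apply Permutation_refl|left; auto|exact T2].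
Qed.

End CutAdmissibility.

(* A derivation of [der] is
   first made into an explicit labelled proof tree, with (ExL)/(ExR) rules
   realising the permutations; erasing its labels gives a valid cut-free
   [ptree].  Correspondence in the erased tree preserves labels and the
   prehistoric relation strictly increases them, so the erased tree is
   prehistoric-cycle-free whenever [R] is a strict order. *)
Section Erasure.
Variable L : Type.
Variable R : L -> L -> Prop.

Fixpoint erase_form (f : lform L) : form :=
  match f with
  | LBot => Bot
  | LVar p => Var p
  | LImp a b => Imp (erase_form a) (erase_form b)
  | LBox _ a => Box (erase_form a)
  end.

Definition erase_seq (s : list (lform L) * list (lform L)) : seqt := (map erase_form (fst s), map erase_form (snd s)).

Definition lswap (i : nat) (l : list (lform L)) : list (lform L) :=
  firstn i l ++ nth (S i) l LBot :: nth i l LBot :: skipn (S (S i)) l.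

Inductive lpt : Type := LPT : rule -> (list (lform L) * list (lform L)) -> list lpt -> lpt.

Definition lconcl (t : lpt) := match t with LPT _ s _ => s end.

Definition lrule_ok (r : rule) (ls : list (lform L) * list (lform L)) (lps : list (list (lform L) * list (lform L))) : Prop :=
  match r with
  | Ax => lps = [] /\ exists p G D, ls = (LVar p :: G, LVar p :: D)
  | BotL => lps = [] /\ exists G D, ls = (LBot :: G, D)
  | ImpL => exists a b G D, ls = (LImp a b :: G, D) /\ lps = [(G, a :: D); (b :: G, D)]
  | ImpR => exists a b G D, ls = (G, LImp a b :: D) /\ lps = [(a :: G, b :: D)]
  | BoxL => exists l a G D, ls = (LBox l a :: G, D) /\ lps = [(a :: LBox l a :: G, D)]
  | BoxR n => exists S W h a D, length S = n /\ Forall (is_box L) S /\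
      (forall x, In x (flat_map (labels L) S ++ labels L a) -> R x h) /\
      ls = (S ++ W, LBox h a :: D) /\ lps = [(S, [a])]
  | BoxCut _ => False
  | ExL i => exists Lx Rx, ls = (Lx, Rx) /\ S i < length Lx /\ lps = [(lswap i Lx, Rx)]
  | ExR i => exists Lx Rx, ls = (Lx, Rx) /\ S i < length Rx /\ lps = [(Lx, lswap i Rx)]
  end.

Inductive lvalid : lpt -> Prop :=
| lvalid_PT r s ts : lrule_ok r s (map lconcl ts) -> Forall lvalid ts -> lvalid (LPT r s ts).

Definition lpt_ind2 (P : lpt -> Prop) (H : forall r s ts, Forall P ts -> P (LPT r s ts)) : forall t, P t :=
  fix F t := match t with
  | LPT r s ts => H r s ts ((fix G ts := match ts return Forall P ts with
                             | [] => Forall_nil _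
                             | t :: ts => Forall_cons _ (F t) (G ts) end) ts)
  end.

Fixpoint erase (t : lpt) : ptree :=
  match t with LPT r s ts => PT r (erase_seq s) (map erase ts) end.

Lemma lswap_cons n a l : lswap (S n) (a :: l) = a :: lswap n l.
Proof. reflexivity. Qed.

Lemma lswap_app P x y l : lswap (length P) (P ++ x :: y :: l) = P ++ y :: x :: l.
Proof.
  induction P as [|a P IH]; [reflexivity|].
  change (length (a::P)) with (S (length P)). change ((a::P) ++ x :: y :: l) with (a :: (P ++ x :: y :: l)).
  rewrite lswap_cons, IH; reflexivity.
Qed.

Lemma erase_swap i l : map erase_form (lswap i l) = swap i (map erase_form l).
Proof.
  revert l; induction i; intros l.
  - destruct l as [|x [|y l]]; reflexivity.
  - destruct l as [|x l]. reflexivity. rewrite lswap_cons. simpl. rewrite IHi. reflexivity.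
Qed.

Lemma nth_error_lswap i l j : S i < length l -> nth_error (lswap i l) j = nth_error l (sw i j).
Proof.
  revert l j; induction i; intros l j H.
  - destruct l as [|x [|y l]]; simpl in *; try lia.
    destruct j as [|[|j]]; reflexivity.
  - destruct l as [|x l]; [simpl in *; lia|]. rewrite lswap_cons. simpl in H.
    destruct j as [|j]. reflexivity.
    simpl. rewrite IHi by lia. unfold sw. simpl.
    destruct (Nat.eqb j i); auto. destruct (Nat.eqb j (S i)); auto.
Qed.

Lemma exL_prefix l l' : Permutation l l' -> forall P D t, lvalid t -> lconcl t = (P ++ l, D) ->
  exists t', lvalid t' /\ lconcl t' = (P ++ l', D).
Proof.
  induction 1; intros P D0 t Ht Hc.
  - eauto.
  - destruct (IHPermutation (P ++ [x]) D0 t Ht) as [t' [H1 H2]].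
    rewrite <- app_assoc. auto. exists t'. rewrite <- app_assoc in H2. auto.
  - exists (LPT (ExL (length P)) (P ++ x :: y :: l, D0) [t]). split; auto.
    constructor; [|constructor; auto]. simpl. do 2 eexists. split; [reflexivity|]. split.
    rewrite length_app. simpl. lia. rewrite lswap_app. rewrite Hc. reflexivity.
  - destruct (IHPermutation1 P D0 t Ht Hc) as [t1 [H1 H2]].
    eapply IHPermutation2; eauto.
Qed.

Lemma exR_prefix l l' : Permutation l l' -> forall P G t, lvalid t -> lconcl t = (G, P ++ l) ->
  exists t', lvalid t' /\ lconcl t' = (G, P ++ l').
Proof.
  induction 1; intros P G0 t Ht Hc.
  - eauto.
  - destruct (IHPermutation (P ++ [x]) G0 t Ht) as [t' [H1 H2]].
    rewrite <- app_assoc. auto. exists t'. rewrite <- app_assoc in H2. auto.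
  - exists (LPT (ExR (length P)) (G0, P ++ x :: y :: l) [t]). split; auto.
    constructor; [|constructor; auto]. simpl. do 2 eexists. split; [reflexivity|]. split.
    rewrite length_app. simpl. lia. rewrite lswap_app. rewrite Hc. reflexivity.
  - destruct (IHPermutation1 P G0 t Ht Hc) as [t1 [H1 H2]].
    eapply IHPermutation2; eauto.
Qed.

Lemma der_to_lpt G D : der L R G D -> exists t, lvalid t /\ lconcl t = (G, D).
Proof.
  induction 1.
  - destruct IHder as [t [H2 H3]].
    destruct (exL_prefix G G' H0 [] D t H2 H3) as [t1 [H4 H5]].
    destruct (exR_prefix D D' H1 [] G' t1 H4 H5) as [t2 [H6 H7]]. eauto.
  - exists (LPT Ax (LVar p :: G, LVar p :: D) []). split; auto. constructor; simpl; eauto 10.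
  - exists (LPT BotL (LBot :: G, D) []). split; auto. constructor; simpl; eauto 10.
  - destruct IHder1 as [t1 [H1 H2]]. destruct IHder2 as [t2 [H3 H4]].
    exists (LPT ImpL (LImp a b :: G, D) [t1; t2]). split; auto. constructor; auto.
    simpl. rewrite H2, H4. eauto 10.
  - destruct IHder as [t1 [H1 H2]].
    exists (LPT ImpR (G, LImp a b :: D) [t1]). split; auto. constructor; auto.
    simpl. rewrite H2. eauto 10.
  - destruct IHder as [t1 [H1 H2]].
    exists (LPT BoxL (LBox l a :: G, D) [t1]). split; auto. constructor; auto.
    simpl. rewrite H2. eauto 10.
  - destruct IHder as [t1 [H3 H4]].
    exists (LPT (BoxR (length S)) (S ++ W, LBox h a :: D) [t1]). split; auto. constructor; auto.
    simpl. rewrite H4. do 5 eexists. repeat split; eauto.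
Qed.

Definition unbox (f : lform L) : form := match f with LBox _ a => erase_form a | _ => Bot end.

Lemma erase_boxed S : Forall (is_box L) S -> map erase_form S = map Box (map unbox S).
Proof. induction 1; simpl; auto. destruct x; simpl in H; try tauto. rewrite IHForall; auto. Qed.

Lemma concl_erase t : concl (erase t) = erase_seq (lconcl t).
Proof. destruct t; reflexivity. Qed.

Lemma rule_erase r s ps : lrule_ok r s ps -> rule_ok r (erase_seq s) (map erase_seq ps).
Proof.
  destruct r; simpl; intros H.
  - destruct H as [H1 [p [G [D H2]]]]. subst. split; auto. unfold erase_seq; simpl. eauto.
  - destruct H as [H1 [G [D H2]]]. subst. split; auto. unfold erase_seq; simpl. eauto.
  - destruct H as [a [b [G [D [H1 H2]]]]]. subst. unfold erase_seq; simpl. eauto 10.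
  - destruct H as [a [b [G [D [H1 H2]]]]]. subst. unfold erase_seq; simpl. eauto 10.
  - destruct H as [l [a [G [D [H1 H2]]]]]. subst. unfold erase_seq; simpl. eauto 10.
  - destruct H as [S [W [h [a [D [H1 [H2 [H3 [H4 H5]]]]]]]]]. subst. unfold erase_seq; simpl.
    exists (map unbox S), (map erase_form W), (erase_form a), (map erase_form D). rewrite length_map. split; auto.
    rewrite map_app, erase_boxed; auto.
  - destruct H.
  - destruct H as [Lx [Rx [H1 [H2 H3]]]]. subst. unfold erase_seq; simpl.
    exists (map erase_form Lx), (map erase_form Rx). rewrite length_map, erase_swap. auto.
  - destruct H as [Lx [Rx [H1 [H2 H3]]]]. subst. unfold erase_seq; simpl.
    exists (map erase_form Lx), (map erase_form Rx). rewrite length_map, erase_swap. auto.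
Qed.

Lemma valid_erase : forall t, lvalid t -> valid (erase t).
Proof.
  apply (lpt_ind2 (fun t => lvalid t -> valid (erase t))). intros r s ts IH Hv.
  inversion Hv; subst. simpl. constructor.
  - rewrite map_map. erewrite map_ext; [|intros; apply concl_erase].
    rewrite <- map_map. apply rule_erase; auto.
  - rewrite Forall_forall in *. intros x Hx. apply in_map_iff in Hx. destruct Hx as [y [<- Hy]].
    apply IH; auto.
Qed.

Fixpoint lsubtree (t : lpt) (a : list nat) : option lpt :=
  match a with
  | [] => Some t
  | k :: a' => match t with
               | LPT _ _ ts => match nth_error ts k with
                              | Some t' => lsubtree t' a'
                              | None => None
                              end
               end
  end.

Lemma subtree_erase a : forall t, subtree (erase t) a = option_map erase (lsubtree t a).
Proof.
  induction a; intros t; simpl; auto. destruct t. simpl. rewrite nth_error_map.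
  destruct (nth_error l a); simpl; auto.
Qed.

Lemma lsubtree_valid a : forall t t', lvalid t -> lsubtree t a = Some t' -> lvalid t'.
Proof.
  induction a as [|k a IH]; intros t t' Hv H; simpl in *.
  - inversion H; subst; auto.
  - destruct t as [r s ts]. destruct (nth_error ts k) eqn:E; [|discriminate].
    inversion Hv; subst. rewrite Forall_forall in H4. apply nth_error_In in E.
    eapply IH; [|eauto]. eauto.
Qed.

Lemma cutfree_erase t : lvalid t -> cutfree (erase t).
Proof.
  intros Hv a r s ts H b E. subst. rewrite subtree_erase in H.
  destruct (lsubtree t a) eqn:E; [|discriminate]. simpl in H.
  pose proof (lsubtree_valid _ _ _ Hv E) as V. destruct l as [r' s' ts']. simpl in H. inversion H; subst.
  inversion V as [? ? ? Hr]; subst. exact Hr.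
Qed.

(* The label of the box occurrence [o] of [erase t] is read off [t]; it is
   invariant under correspondence and increases along the prehistoric relation. *)
Fixpoint lsubf (f : lform L) (p : list nat) : option (lform L) :=
  match p with
  | [] => Some f
  | k :: p' => match f, k with
               | LImp a _, 0 => lsubf a p'
               | LImp _ b, 1 => lsubf b p'
               | LBox _ a, 0 => lsubf a p'
               | _, _ => None
               end
  end.

Lemma subf_erase p : forall f, subf (erase_form f) p = option_map erase_form (lsubf f p).
Proof.
  induction p as [|k p IH]; intros f; [destruct f; reflexivity|].
  destruct f as [| |a b|l a]; destruct k as [|[|k]]; simpl; auto.
Qed.

Definition lside (s : list (lform L) * list (lform L)) (b : bool) := if b then snd s else fst s.

Definition label_at (s : list (lform L) * list (lform L)) (lc : loc) : option L :=
  match lc with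
  | (b, i, p) => match nth_error (lside s b) i with
                 | Some f => match lsubf f p with Some (LBox l _) => Some l | _ => None end
                 | None => None
                 end
  end.

Definition label_of (t : lpt) (o : occ) : option L :=
  match lsubtree t (o_addr o) with
  | Some t' => label_at (lconcl t') (occ_loc o)
  | None => None
  end.

Lemma box_occ_label t o : box_occ (erase t) o -> exists l, label_of t o = Some l.
Proof.
  intros [r [s [ts [f [a [H1 [H2 H3]]]]]]]. unfold label_of.
  rewrite subtree_erase in H1. destruct (lsubtree t (o_addr o)) as [t'|]; [|discriminate].
  simpl in H1. inversion H1. destruct t' as [r' s' ts']. simpl in *. inversion H0; subst.
  unfold occ_loc, label_at.
  assert (E : side (erase_seq s') (o_side o) = map erase_form (lside s' (o_side o))) by (destruct (o_side o); reflexivity).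
  rewrite E, nth_error_map in H2.
  destruct (nth_error (lside s' (o_side o)) (o_idx o)) as [label_form|]; [|discriminate]. simpl in H2. inversion H2; subst.
  rewrite subf_erase in H3. destruct (lsubf label_form (o_path o)) as [y|]; [|discriminate]. simpl in H3.
  inversion H3. destruct y; simpl in *; try discriminate. eauto.
Qed.

Lemma ldc_label r k lc lc' s ps pk : lrule_ok r s ps -> ldc r k lc lc' -> nth_error ps k = Some pk ->
  label_at pk lc = label_at s lc'.
Proof.
  intros Hr Hd Hn. destruct Hd; simpl in Hr.
  all: try (destruct Hr as [a' [b' [G [D [E1 E2]]]]]; subst; simpl in Hn; inversion Hn; subst; reflexivity).
  all: try (destruct Hr as [l' [a' [G [D [E1 E2]]]]]; subst; simpl in Hn; inversion Hn; subst; reflexivity).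
  - destruct Hr as [S [W [h [a' [D [E0 [E1 [E2 [E3 E4]]]]]]]]]. subst. simpl in Hn. inversion Hn; subst.
    simpl. rewrite nth_error_app1; auto.
  - destruct Hr as [S [W [h [a' [D [E0 [E1 [E2 [E3 E4]]]]]]]]]. subst. simpl in Hn. inversion Hn; subst.
    reflexivity.
  - destruct Hr.
  - destruct Hr.
  - destruct Hr.
  - destruct Hr.
  - destruct Hr.
  - destruct Hr as [Lx [Rx [E1 [E2 E3]]]]. subst. simpl in Hn. inversion Hn; subst.
    simpl. rewrite nth_error_lswap; auto.
  - destruct Hr as [Lx [Rx [E1 [E2 E3]]]]. subst. simpl in Hn. inversion Hn; subst. reflexivity.
  - destruct Hr as [Lx [Rx [E1 [E2 E3]]]]. subst. simpl in Hn. inversion Hn; subst. reflexivity.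
  - destruct Hr as [Lx [Rx [E1 [E2 E3]]]]. subst. simpl in Hn. inversion Hn; subst.
    simpl. rewrite nth_error_lswap; auto.
Qed.

Lemma lsubtree_app a : forall t b, lsubtree t (a ++ b) =
  match lsubtree t a with Some t' => lsubtree t' b | None => None end.
Proof.
  induction a as [|k a IH]; intros t b; simpl; auto.
  destruct t as [r s ts]. destruct (nth_error ts k); auto.
Qed.

Lemma lsubtree_one r s ts k : lsubtree (LPT r s ts) [k] = nth_error ts k.
Proof. simpl. destruct (nth_error ts k); auto. Qed.

(* hence correspondence, and so each family, carries a single label *)
Lemma dcorr_label t : lvalid t -> forall o o', dcorr (erase t) o o' -> label_of t o = label_of t o'.
Proof.
  intros Hv o o' [Hb [Hb' [a [r [s [ts [H1 H2]]]]]]].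
  rewrite subtree_erase in H1. destruct (lsubtree t a) as [lt|] eqn:E; [|discriminate].
  simpl in H1. destruct lt as [r' s' ts']. simpl in H1. inversion H1; subst.
  pose proof (lsubtree_valid _ _ _ Hv E) as V. inversion V as [? ? ? Hr Hf]; subst.
  destruct H2 as [[k [A1 [A2 A3]]]|[c [p [A1 _]]]].
  - destruct (box_occ_label _ _ Hb) as [l Hl].
    unfold label_of in *. rewrite A1, lsubtree_app, E, lsubtree_one in *. rewrite A2, E.
    destruct (nth_error ts' k) as [c|] eqn:Ek; [|discriminate].
    change (lconcl (LPT r s' ts')) with s'.
    eapply ldc_label; eauto. rewrite nth_error_map, Ek. reflexivity.
  - subst. simpl in Hr. destruct Hr.
Qed.

Lemma corr_label t : lvalid t -> forall o o', corr (erase t) o o' -> label_of t o = label_of t o'.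
Proof.
  intros Hv o o' H. induction H; auto.
  - eapply dcorr_label; eauto.
  - congruence.
Qed.

Lemma lsubf_labels f : forall p l z, lsubf f p = Some (LBox l z) -> In l (labels L f).
Proof.
  induction f as [| |a IHa b IHb|l0 a IHa]; intros p l z H; destruct p as [|k p]; simpl in H; try discriminate.
  - destruct k as [|[|k]]; try discriminate; simpl; apply in_or_app; eauto.
  - inversion H; subst. left; auto.
  - destruct k; try discriminate. right. eauto.
Qed.

Lemma label_at_in S x lc l : label_at (S, [x]) lc = Some l -> In l (flat_map (labels L) S ++ labels L x).
Proof.
  destruct lc as [[b i] p]. simpl. intros H.
  destruct (nth_error (lside (S, [x]) b) i) as [y|] eqn:E; [|discriminate].
  destruct (lsubf y p) as [[| | | l' z]|] eqn:E2; try discriminate. inversion H; subst.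
  apply lsubf_labels in E2. apply nth_error_In in E.
  destruct b; simpl in E.
  - destruct E as [<-|[]]. apply in_or_app; right; auto.
  - apply in_or_app; left. apply in_flat_map. eauto.
Qed.

Lemma prec_label t : lvalid t -> forall o1 o2, prec (erase t) o1 o2 ->
  exists l1 l2, label_of t o1 = Some l1 /\ label_of t o2 = Some l2 /\ R l1 l2.
Proof.
  intros Hv o1 o2 [a [n [s [ts [p [H1 [H2 [H3 [H4 H5]]]]]]]]].
  apply corr_label in H4; auto. apply corr_label in H5; auto.
  rewrite subtree_erase in H1. destruct (lsubtree t a) as [lt|] eqn:E; [|discriminate].
  simpl in H1. destruct lt as [r' s' ts']. simpl in H1. inversion H1; subst.
  pose proof (lsubtree_valid _ _ _ Hv E) as V. inversion V as [? ? ? Hr Hf]; subst.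
  destruct Hr as [S [W [h [x [D [_ [_ [HR [E1 E2]]]]]]]]]. subst.
  destruct ts' as [|c [|]]; try discriminate. simpl in E2. inversion E2 as [Ec].
  destruct (box_occ_label _ _ H2) as [l Hl].
  exists l, h. split; [congruence|]. split.
  - rewrite H5. unfold label_of. simpl o_addr. rewrite E. reflexivity.
  - apply HR. unfold label_of in Hl. rewrite H3, lsubtree_app, E, lsubtree_one in Hl. simpl in Hl.
    rewrite Ec in Hl. apply (label_at_in S x (occ_loc p)). exact Hl.
Qed.

Theorem pcfree_erase t : (forall x y z, R x y -> R y z -> R x z) -> (forall x, ~ R x x) ->
  lvalid t -> pcfree (erase t).
Proof.
  intros Rt Ri Hv [o [Hb Hc]].
  assert (K : forall x y, clos_trans occ (prec (erase t)) x y ->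
    exists lx ly, label_of t x = Some lx /\ label_of t y = Some ly /\ R lx ly).
  { induction 1.
    - apply prec_label; auto.
    - destruct IHclos_trans1 as [a1 [b1 [A1 [B1 C1]]]]. destruct IHclos_trans2 as [a2 [b2 [A2 [B2 C2]]]].
      rewrite B1 in A2. inversion A2; subst. exists a1, b2. eauto. }
  destruct (K o o Hc) as [lx [ly [A [B C]]]]. rewrite A in B. inversion B; subst. eapply Ri; eauto.
Qed.

End Erasure.
Definition ptree_ind2 (P : ptree -> Prop) (H : forall r s ts, Forall P ts -> P (PT r s ts)) : forall t, P t :=
  fix F t := match t with
  | PT r s ts => H r s ts ((fix G ts := match ts return Forall P ts with
                             | [] => Forall_nil _
                             | t :: ts => Forall_cons _ (F t) (G ts) end) ts)
  end.

Lemma subtree_app a : forall t b, subtree t (a ++ b) =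
  match subtree t a with Some t' => subtree t' b | None => None end.
Proof.
  induction a as [|k a IH]; intros t b; simpl; auto.
  destruct t as [r s ts]. destruct (nth_error ts k); auto.
Qed.

Lemma subtree_one r s ts k : subtree (PT r s ts) [k] = nth_error ts k.
Proof. simpl. destruct (nth_error ts k); auto. Qed.

(* A family is represented by the predicate of the
   occurrences corresponding to one of its members; a formula is labelled by
   giving the family of each of its box subformulas, indexed by path. *)
Definition Fam := occ -> Prop.

Fixpoint label_form (f : form) (g : list nat -> Fam) : lform Fam :=
  match f with
  | Bot => LBot
  | Var p => LVar p
  | Imp a b => LImp (label_form a (fun p => g (0 :: p))) (label_form b (fun p => g (1 :: p)))
  | Box a => LBox (g []) (label_form a (fun p => g (0 :: p)))
  end.

Lemma erase_label_form f : forall g, erase_form Fam (label_form f g) = f.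
Proof. induction f; intros; simpl; f_equal; auto. Qed.

Lemma label_form_ext f : forall g1 g2, (forall p x, subf f p = Some (Box x) -> g1 p = g2 p) -> label_form f g1 = label_form f g2.
Proof.
  induction f as [| |a IHa b IHb|a IHa]; intros g1 g2 H; simpl; auto.
  - f_equal; [apply IHa|apply IHb]; intros p x Hp; eapply H; simpl; eauto.
  - f_equal. eapply (H []); simpl; eauto. apply IHa. intros p x Hp; eapply H; simpl; eauto.
Qed.

Lemma labels_label_form f : forall g l, In l (labels Fam (label_form f g)) -> exists p x, subf f p = Some (Box x) /\ l = g p.
Proof.
  induction f as [| |a IHa b IHb|a IHa]; intros g l H; simpl in H; try tauto.
  - apply in_app_or in H. destruct H as [H|H].
    + destruct (IHa _ _ H) as [p [x [H1 H2]]]. exists (0 :: p), x. auto.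
    + destruct (IHb _ _ H) as [p [x [H1 H2]]]. exists (1 :: p), x. auto.
  - destruct H as [H|H].
    + exists [], a. auto.
    + destruct (IHa _ _ H) as [p [x [H1 H2]]]. exists (0 :: p), x. auto.
Qed.

(* The formulas of the node at
   address [addr] are labelled by the families of their box occurrences.  Each
   rule instance of [Tc] then becomes a rule of the labelled calculus, for the
   label order [fam_order] generated by the prehistoric relation. *)
Section FamilyLabelling.
Variable Tc : ptree.

Definition fam (o : occ) : Fam := fun o' => corr Tc o o'.

Lemma fam_corr o o' : corr Tc o o' -> fam o = fam o'.
Proof.
  intros H. apply functional_extensionality. intros x. apply propositional_extensionality.
  unfold fam. split; intros H1.
  - eapply rst_trans; [apply rst_sym; exact H|exact H1].
  - eapply rst_trans; [exact H|exact H1].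
Qed.

Fixpoint label_list (a : list nat) (sd : bool) (i : nat) (l : list form) : list (lform Fam) :=
  match l with
  | [] => []
  | f :: l => label_form f (fun p => fam (Occ a sd i p)) :: label_list a sd (S i) l
  end.

Lemma erase_label_list a sd l : forall i, map (erase_form Fam) (label_list a sd i l) = l.
Proof. induction l; intros; simpl; auto. rewrite erase_label_form, IHl. auto. Qed.

Lemma nth_label_list a sd l : forall i j, nth_error (label_list a sd i l) j =
  option_map (fun f => label_form f (fun p => fam (Occ a sd (i + j) p))) (nth_error l j).
Proof.
  induction l as [|f l IH]; intros i j; destruct j; simpl; auto.
  - rewrite Nat.add_0_r. auto.
  - rewrite IH. f_equal. apply functional_extensionality. intros y. f_equal.
    apply functional_extensionality. intros p. f_equal. f_equal. lia.
Qed.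

Lemma label_list_ext l : forall a0 s0 i0 a1 s1 i1,
  (forall j f p x, nth_error l j = Some f -> subf f p = Some (Box x) ->
     fam (Occ a0 s0 (i0 + j) p) = fam (Occ a1 s1 (i1 + j) p)) ->
  label_list a0 s0 i0 l = label_list a1 s1 i1 l.
Proof.
  induction l as [|f l IH]; intros a0 s0 i0 a1 s1 i1 H; simpl; auto. f_equal.
  - apply label_form_ext. intros p x Hp. specialize (H 0 f p x eq_refl Hp). rewrite !Nat.add_0_r in H. auto.
  - apply IH. intros j g p x Hj Hp. specialize (H (S j) g p x Hj Hp). rewrite !Nat.add_succ_r in H. auto.
Qed.

Lemma label_list_app a sd l1 : forall i l2, label_list a sd i (l1 ++ l2) = label_list a sd i l1 ++ label_list a sd (i + length l1) l2.
Proof.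
  induction l1; intros; simpl. rewrite Nat.add_0_r; auto.
  rewrite IHl1. f_equal. f_equal. f_equal. lia.
Qed.

Lemma labels_label_list a sd L : forall i l, In l (flat_map (labels Fam) (label_list a sd i L)) ->
  exists j f p x, nth_error L j = Some f /\ subf f p = Some (Box x) /\ l = fam (Occ a sd (i + j) p).
Proof.
  induction L as [|f L IH]; intros i l H; simpl in H; try tauto.
  apply in_app_or in H. destruct H as [H|H].
  - apply labels_label_form in H. destruct H as [p [x [H1 H2]]]. exists 0, f, p, x. rewrite Nat.add_0_r. auto.
  - destruct (IH _ _ H) as [j [g [p [x [H1 [H2 H3]]]]]]. exists (S j), g, p, x.
    rewrite Nat.add_succ_r. auto.
Qed.

Lemma boxed_label_list a sd G : forall i, Forall (is_box Fam) (label_list a sd i (map Box G)).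
Proof. induction G; intros; simpl; constructor; simpl; auto. Qed.

Lemma fam_step addr r s ts k tk sd i p sd' i' p' f f' x x' :
  subtree Tc addr = Some (PT r s ts) -> nth_error ts k = Some tk -> ldc r k (sd, i, p) (sd', i', p') ->
  nth_error (side (concl tk) sd) i = Some f -> subf f p = Some (Box x) ->
  nth_error (side s sd') i' = Some f' -> subf f' p' = Some (Box x') ->
  fam (Occ (addr ++ [k]) sd i p) = fam (Occ addr sd' i' p').
Proof.
  intros H1 H2 H3 H4 H5 H6 H7. apply fam_corr. apply rst_step. split; [|split].
  - destruct tk as [r0 s0 ts0]. exists r0, s0, ts0, f, x. simpl.
    rewrite subtree_app, H1, subtree_one, H2. auto.
  - exists r, s, ts, f', x'. simpl. auto.
  - exists addr, r, s, ts. split; auto. left. exists k. simpl. auto.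
Qed.

Definition fam_prec (l h : Fam) : Prop := exists o1 o2, prec Tc o1 o2 /\ l = fam o1 /\ h = fam o2.
Definition fam_order := clos_trans Fam fam_prec.

Lemma nth_error_swap i l j : S i < length l -> nth_error (swap i l) j = nth_error l (sw i j).
Proof.
  revert l j; induction i; intros l j H.
  - destruct l as [|x [|y l]]; simpl in *; try lia.
    destruct j as [|[|j]]; reflexivity.
  - destruct l as [|x l]; [simpl in *; lia|]. simpl in H.
    change (swap (S i) (x :: l)) with (x :: swap i l).
    destruct j as [|j]. reflexivity.
    simpl. rewrite IHi by lia. unfold sw. simpl.
    destruct (Nat.eqb j i); auto. destruct (Nat.eqb j (S i)); auto.
Qed.

Lemma lswap_perm i (l : list (lform Fam)) : S i < length l -> Permutation (lswap Fam i l) l.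
Proof.
  revert l; induction i; intros l H.
  - destruct l as [|x [|y l]]; simpl in *; try lia. apply perm_swap.
  - destruct l as [|x l]; [simpl in *; lia|]. rewrite lswap_cons. constructor. apply IHi. simpl in H; lia.
Qed.

Lemma length_label_list a sd l : forall i, length (label_list a sd i l) = length l.
Proof. induction l; intros; simpl; auto. Qed.

Lemma swap_label_list a0 a1 sd i l :
  (forall j f p x, nth_error (swap i l) j = Some f -> subf f p = Some (Box x) ->
     fam (Occ a0 sd j p) = fam (Occ a1 sd (sw i j) p)) ->
  S i < length l ->
  label_list a0 sd 0 (swap i l) = lswap Fam i (label_list a1 sd 0 l).
Proof.
  intros H Hl. apply nth_error_ext. intros j.
  rewrite nth_error_lswap. 2: { rewrite length_label_list. auto. }
  rewrite !nth_label_list. simpl. rewrite nth_error_swap by auto.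
  destruct (nth_error l (sw i j)) as [f|] eqn:E; simpl; auto. f_equal.
  apply label_form_ext. intros p x Hp. eapply H; eauto. rewrite nth_error_swap; auto.
Qed.

Lemma prec_edge addr n s ts t0 sd i p f x :
  subtree Tc addr = Some (PT (BoxR n) s ts) -> nth_error ts 0 = Some t0 ->
  nth_error (side (concl t0) sd) i = Some f -> subf f p = Some (Box x) ->
  fam_order (fam (Occ (addr ++ [0]) sd i p)) (fam (Occ addr RR 0 [])).
Proof.
  intros H1 H2 H3 H4. apply t_step. exists (Occ (addr ++ [0]) sd i p), (Occ addr RR 0 []).
  split; auto. exists addr, n, s, ts, (Occ (addr ++ [0]) sd i p). split; auto. split.
  - destruct t0 as [r0 s0 ts0]. exists r0, s0, ts0, f, x. simpl.
    rewrite subtree_app, H1, subtree_one, H2. auto.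
  - split; auto. split; apply rst_refl.
Qed.

(* an occurrence of a premise gets the label of the conclusion occurrence it
   directly corresponds to *)
Ltac fstep kk tkk Ec := eapply fam_step with (k := kk) (tk := tkk);
  [eassumption|reflexivity| |rewrite Ec; simpl; first [eassumption|reflexivity]|eassumption| simpl; first [eassumption|reflexivity]|simpl; eassumption].

Definition labelled_derivable (addr : list nat) (s : seqt) : Prop :=
  der Fam fam_order (label_list addr LL 0 (fst s)) (label_list addr RR 0 (snd s)).

Definition premises_labelled (addr : list nat) (ts : list ptree) : Prop :=
  forall k tk, nth_error ts k = Some tk -> labelled_derivable (addr ++ [k]) (concl tk).

Lemma label_impL addr s ts : subtree Tc addr = Some (PT ImpL s ts) ->
  rule_ok ImpL s (map concl ts) -> premises_labelled addr ts -> labelled_derivable addr s.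
Proof.
  intros Hs Hr IHk. unfold premises_labelled, labelled_derivable in *. simpl in Hr.
  destruct Hr as [a [b [G [D [-> E2]]]]].
  destruct ts as [|t0 [|t1 [|]]]; simpl in E2; try discriminate. inversion E2 as [[Ec0 Ec1]].
  pose proof (IHk 0 t0 eq_refl) as X0. pose proof (IHk 1 t1 eq_refl) as X1.
  rewrite Ec0 in X0. rewrite Ec1 in X1. simpl in X0, X1 |- *.
  assert (e1 : label_list (addr ++ [0]) LL 0 G = label_list addr LL 1 G).
  { apply label_list_ext. intros j f p x Hj Hp. fstep 0 t0 Ec0. apply dc_impL_0G. }
  assert (e2 : label_form a (fun p => fam (Occ (addr ++ [0]) RR 0 p)) = label_form a (fun p => fam (Occ addr LL 0 (0 :: p)))).
  { apply label_form_ext. intros p x Hp. fstep 0 t0 Ec0. apply dc_impL_0A. }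
  assert (e3 : label_list (addr ++ [0]) RR 1 D = label_list addr RR 0 D).
  { apply label_list_ext. intros j f p x Hj Hp. fstep 0 t0 Ec0. apply dc_impL_0D. }
  assert (e4 : label_form b (fun p => fam (Occ (addr ++ [1]) LL 0 p)) = label_form b (fun p => fam (Occ addr LL 0 (1 :: p)))).
  { apply label_form_ext. intros p x Hp. fstep 1 t1 Ec1. apply dc_impL_1B. }
  assert (e5 : label_list (addr ++ [1]) LL 1 G = label_list addr LL 1 G).
  { apply label_list_ext. intros j f p x Hj Hp. fstep 1 t1 Ec1. apply dc_impL_1G. }
  assert (e6 : label_list (addr ++ [1]) RR 0 D = label_list addr RR 0 D).
  { apply label_list_ext. intros j f p x Hj Hp. fstep 1 t1 Ec1. apply dc_impL_1D. }
  rewrite e1, e2, e3 in X0. rewrite e4, e5, e6 in X1. apply d_impL; auto.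
Qed.

Lemma label_impR addr s ts : subtree Tc addr = Some (PT ImpR s ts) ->
  rule_ok ImpR s (map concl ts) -> premises_labelled addr ts -> labelled_derivable addr s.
Proof.
  intros Hs Hr IHk. unfold premises_labelled, labelled_derivable in *. simpl in Hr.
  destruct Hr as [a [b [G [D [-> E2]]]]].
  destruct ts as [|t0 [|]]; simpl in E2; try discriminate. inversion E2 as [Ec0].
  pose proof (IHk 0 t0 eq_refl) as X0. rewrite Ec0 in X0. simpl in X0 |- *.
  assert (e1 : label_form a (fun p => fam (Occ (addr ++ [0]) LL 0 p)) = label_form a (fun p => fam (Occ addr RR 0 (0 :: p)))).
  { apply label_form_ext. intros p x Hp. fstep 0 t0 Ec0. apply dc_impR_A. }
  assert (e2 : label_list (addr ++ [0]) LL 1 G = label_list addr LL 0 G).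
  { apply label_list_ext. intros j f p x Hj Hp. fstep 0 t0 Ec0. apply dc_impR_G. }
  assert (e3 : label_form b (fun p => fam (Occ (addr ++ [0]) RR 0 p)) = label_form b (fun p => fam (Occ addr RR 0 (1 :: p)))).
  { apply label_form_ext. intros p x Hp. fstep 0 t0 Ec0. apply dc_impR_B. }
  assert (e4 : label_list (addr ++ [0]) RR 1 D = label_list addr RR 1 D).
  { apply label_list_ext. intros j f p x Hj Hp. fstep 0 t0 Ec0. apply dc_impR_D. }
  rewrite e1, e2, e3, e4 in X0. apply d_impR; auto.
Qed.

Lemma label_boxL addr s ts : subtree Tc addr = Some (PT BoxL s ts) ->
  rule_ok BoxL s (map concl ts) -> premises_labelled addr ts -> labelled_derivable addr s.
Proof.
  intros Hs Hr IHk. unfold premises_labelled, labelled_derivable in *. simpl in Hr.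
  destruct Hr as [a [G [D [-> E2]]]].
  destruct ts as [|t0 [|]]; simpl in E2; try discriminate. inversion E2 as [Ec0].
  pose proof (IHk 0 t0 eq_refl) as X0. rewrite Ec0 in X0. cbn [fst snd label_list] in X0 |- *.
  assert (e1 : label_form a (fun p => fam (Occ (addr ++ [0]) LL 0 p)) = label_form a (fun p => fam (Occ addr LL 0 (0 :: p)))).
  { apply label_form_ext. intros p x Hp. fstep 0 t0 Ec0. apply dc_boxL_A. }
  assert (e2 : label_form (Box a) (fun p => fam (Occ (addr ++ [0]) LL 1 p)) = label_form (Box a) (fun p => fam (Occ addr LL 0 p))).
  { apply label_form_ext. intros p x Hp. fstep 0 t0 Ec0. apply dc_boxL_BA. }
  assert (e3 : label_list (addr ++ [0]) LL 2 G = label_list addr LL 1 G).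
  { apply label_list_ext. intros j f p x Hj Hp. fstep 0 t0 Ec0. apply dc_boxL_G. }
  assert (e4 : label_list (addr ++ [0]) RR 0 D = label_list addr RR 0 D).
  { apply label_list_ext. intros j f p x Hj Hp. fstep 0 t0 Ec0. apply dc_boxL_D. }
  rewrite e1, e2, e3, e4 in X0. simpl in X0 |- *. apply d_boxL; auto.
Qed.

(* (⊃Box): every family in the premise is prehistoric to the family of the
   principal box, so the labelled side condition holds *)
Lemma label_boxR addr n s ts : subtree Tc addr = Some (PT (BoxR n) s ts) ->
  rule_ok (BoxR n) s (map concl ts) -> premises_labelled addr ts -> labelled_derivable addr s.
Proof.
  intros Hs Hr IHk. unfold premises_labelled, labelled_derivable in *. simpl in Hr.
  destruct Hr as [G [W [a [D [Hn [-> E2]]]]]].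
  destruct ts as [|t0 [|]]; simpl in E2; try discriminate. inversion E2 as [Ec0].
  pose proof (IHk 0 t0 eq_refl) as X0. rewrite Ec0 in X0. cbn [fst snd label_list] in X0 |- *.
  rewrite label_list_app.
  assert (e1 : label_list (addr ++ [0]) LL 0 (map Box G) = label_list addr LL 0 (map Box G)).
  { apply label_list_ext. intros j f p x Hj Hp. eapply fam_step with (k := 0) (tk := t0);
      [eassumption|reflexivity| |rewrite Ec0; simpl; eassumption|eassumption| |simpl; eassumption].
    - apply dc_boxR_G. subst n. rewrite <- (length_map Box). apply nth_error_Some. simpl. congruence.
    - simpl. rewrite nth_error_app1; auto. apply nth_error_Some. simpl. congruence. }
  assert (e2 : label_form a (fun p => fam (Occ (addr ++ [0]) RR 0 p)) = label_form a (fun p => fam (Occ addr RR 0 (0 :: p)))).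
  { apply label_form_ext. intros p x Hp. fstep 0 t0 Ec0. apply dc_boxR_A. }
  simpl label_form. rewrite <- e1, <- e2. apply d_boxR; auto.
  + apply boxed_label_list.
  + intros x Hx. apply in_app_or in Hx. destruct Hx as [Hx|Hx].
    * apply labels_label_list in Hx. destruct Hx as [j [f [p [y [H1 [H2 ->]]]]]].
      eapply prec_edge; [eassumption|reflexivity| |eassumption]. rewrite Ec0. simpl. eassumption.
    * apply labels_label_form in Hx. destruct Hx as [p [y [H1 ->]]].
      eapply prec_edge; [eassumption|reflexivity| |eassumption]. rewrite Ec0. simpl. reflexivity.
Qed.

Lemma label_exL addr n s ts : subtree Tc addr = Some (PT (ExL n) s ts) ->
  rule_ok (ExL n) s (map concl ts) -> premises_labelled addr ts -> labelled_derivable addr s.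
Proof.
  intros Hs Hr IHk. unfold premises_labelled, labelled_derivable in *. simpl in Hr.
  destruct Hr as [Lx [Rx [-> [Hl E2]]]].
  destruct ts as [|t0 [|]]; simpl in E2; try discriminate. inversion E2 as [Ec0].
  pose proof (IHk 0 t0 eq_refl) as X0. rewrite Ec0 in X0. simpl in X0 |- *.
  rewrite (swap_label_list (addr ++ [0]) addr LL n Lx) in X0; auto.
  + assert (e : label_list (addr ++ [0]) RR 0 Rx = label_list addr RR 0 Rx).
    { apply label_list_ext. intros j f p x Hj Hp. fstep 0 t0 Ec0. apply dc_exL_R. }
    rewrite e in X0. eapply d_perm; [exact X0| |apply Permutation_refl].
    apply lswap_perm. rewrite length_label_list. auto.
  + intros j f p x Hj Hp. eapply fam_step with (k := 0) (tk := t0);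
      [eassumption|reflexivity|apply dc_exL_L|rewrite Ec0; simpl; eassumption|eassumption| |eassumption].
    simpl. rewrite <- nth_error_swap; auto.
Qed.

Lemma label_exR addr n s ts : subtree Tc addr = Some (PT (ExR n) s ts) ->
  rule_ok (ExR n) s (map concl ts) -> premises_labelled addr ts -> labelled_derivable addr s.
Proof.
  intros Hs Hr IHk. unfold premises_labelled, labelled_derivable in *. simpl in Hr.
  destruct Hr as [Lx [Rx [-> [Hl E2]]]].
  destruct ts as [|t0 [|]]; simpl in E2; try discriminate. inversion E2 as [Ec0].
  pose proof (IHk 0 t0 eq_refl) as X0. rewrite Ec0 in X0. simpl in X0 |- *.
  rewrite (swap_label_list (addr ++ [0]) addr RR n Rx) in X0; auto.
  + assert (e : label_list (addr ++ [0]) LL 0 Lx = label_list addr LL 0 Lx).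
    { apply label_list_ext. intros j f p x Hj Hp. fstep 0 t0 Ec0. apply dc_exR_L. }
    rewrite e in X0. eapply d_perm; [exact X0|apply Permutation_refl|].
    apply lswap_perm. rewrite length_label_list. auto.
  + intros j f p x Hj Hp. eapply fam_step with (k := 0) (tk := t0);
      [eassumption|reflexivity|apply dc_exR_R|rewrite Ec0; simpl; eassumption|eassumption| |eassumption].
    simpl. rewrite <- nth_error_swap; auto.
Qed.

Lemma input_der : forall t addr, subtree Tc addr = Some t -> valid t -> cutfree t ->
  labelled_derivable addr (concl t).
Proof.
  apply (ptree_ind2 (fun t => forall addr, subtree Tc addr = Some t -> valid t -> cutfree t ->
    labelled_derivable addr (concl t))).
  intros r s ts IH addr Hs Hv Hc.
  inversion Hv as [? ? ? Hr Hf]; subst.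
  assert (IHk : premises_labelled addr ts).
  { intros k tk Hk. rewrite Forall_forall in IH, Hf. apply IH.
    - eapply nth_error_In; eauto.
    - rewrite subtree_app, Hs, subtree_one; auto.
    - apply Hf. eapply nth_error_In; eauto.
    - intros a' r' s' ts' Ha b. apply (Hc (k :: a') r' s' ts'). simpl. rewrite Hk. auto. }
  change (concl (PT r s ts)) with s.
  destruct r as [| | | | |n|c|n|n].
  - destruct Hr as [_ [p [G [D ->]]]]. apply d_ax.
  - destruct Hr as [_ [G [D ->]]]. apply d_bot.
  - eapply label_impL; eauto.
  - eapply label_impR; eauto.
  - eapply label_boxL; eauto.
  - eapply label_boxR; eauto.
  - exfalso. apply (Hc [] _ _ _ eq_refl c). reflexivity.
  - eapply label_exL; eauto.
  - eapply label_exR; eauto.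
Qed.

End FamilyLabelling.

(* If [Tc] is prehistoric-cycle-free then [fam_order Tc] is irreflexive: a
   chain of prehistoric steps between families lifts to a chain of [prec]
   between occurrences, since [prec] respects correspondence. *)
Section FamilyOrder.
Variable Tc : ptree.

Lemma box_occ_intro addr t sd i p f x : subtree Tc addr = Some t ->
  nth_error (side (concl t) sd) i = Some f -> subf f p = Some (Box x) -> box_occ Tc (Occ addr sd i p).
Proof. destruct t as [r s ts]. intros H1 H2 H3. exists r, s, ts, f, x. auto. Qed.

Lemma corr_box x y : corr Tc x y -> (box_occ Tc x <-> box_occ Tc y).
Proof.
  induction 1.
  - destruct H as [H1 [H2 _]]. tauto.
  - tauto.
  - tauto.
  - tauto.
Qed.

Lemma prec_corr o0 o1 o2 o3 : prec Tc o1 o2 -> corr Tc o0 o1 -> corr Tc o2 o3 -> prec Tc o0 o3.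
Proof.
  intros [a [n [s [ts [p [H1 [H2 [H3 [H4 H5]]]]]]]]] C1 C2.
  exists a, n, s, ts, p. repeat split; auto.
  - eapply rst_trans; eauto.
  - eapply rst_trans; [apply rst_sym; exact C2|exact H5].
Qed.

Lemma ct_left a b : clos_trans occ (prec Tc) a b -> forall c, corr Tc c a -> clos_trans occ (prec Tc) c b.
Proof.
  induction 1; intros c C.
  - apply t_step. eapply prec_corr; [exact H|exact C|apply rst_refl].
  - eapply t_trans; [apply IHclos_trans1; eauto|auto].
Qed.

Lemma ct_right a b : clos_trans occ (prec Tc) a b -> forall c, corr Tc b c -> clos_trans occ (prec Tc) a c.
Proof.
  induction 1; intros c C.
  - apply t_step. eapply prec_corr; [exact H|apply rst_refl|exact C].
  - eapply t_trans; [exact H|apply IHclos_trans2; eauto].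
Qed.

Lemma ct_box a b : clos_trans occ (prec Tc) a b -> box_occ Tc a.
Proof.
  induction 1; auto.
  destruct H as [a [n [s [ts [p [H1 [H2 [H3 [H4 H5]]]]]]]]].
  apply (corr_box _ _ H4). auto.
Qed.

Lemma fam_eq_corr o o' : fam Tc o = fam Tc o' -> corr Tc o o'.
Proof.
  intros H. assert (fam Tc o' o') by apply rst_refl. rewrite <- H in H0. exact H0.
Qed.

Lemma fam_order_chain l1 l2 : fam_order Tc l1 l2 -> exists o1 o2, clos_trans occ (prec Tc) o1 o2 /\ l1 = fam Tc o1 /\ l2 = fam Tc o2.
Proof.
  induction 1.
  - destruct H as [o1 [o2 [H1 [H2 H3]]]]. exists o1, o2. split; auto. apply t_step; auto.
  - destruct IHclos_trans1 as [o1 [o2 [A1 [B1 C1]]]]. destruct IHclos_trans2 as [o3 [o4 [A2 [B2 C2]]]].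
    exists o1, o4. split; auto. eapply t_trans; [exact A1|]. eapply ct_left; eauto.
    apply fam_eq_corr. congruence.
Qed.

Lemma fam_order_irrefl : pcfree Tc -> forall l, ~ fam_order Tc l l.
Proof.
  intros Hp l H. apply fam_order_chain in H. destruct H as [o1 [o2 [A [B C]]]].
  apply Hp. exists o1. split.
  - eapply ct_box; eauto.
  - eapply ct_right; eauto. apply fam_eq_corr. congruence.
Qed.

End FamilyOrder.

(* The outermost boxes
   of [Box A], [Box (A -> B)] and the three [Box B] all lie in the family of
   the conclusion's [Box B]; the subformulas [A] of [Box A] and of
   [Box (A -> B)] carry the same families; and the side formulas keep their
   families across the rule. *)
Section FinalCut.
Variables (G D : list form) (a b : form) (TL TR : ptree).

Definition cut_tree : ptree := PT (BoxCut a) (G, Box b :: D) [TL; TR].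
Definition cut_family : Fam := fam cut_tree (Occ [] RR 0 []).
Definition label_A : lform Fam := label_form a (fun p => fam cut_tree (Occ [0] RR 0 (0 :: p))).
Definition label_B : lform Fam := label_form b (fun p => fam cut_tree (Occ [] RR 0 (0 :: p))).
Definition label_G : list (lform Fam) := label_list cut_tree [] LL 0 G.
Definition label_D : list (lform Fam) := label_list cut_tree [] RR 1 D.

Lemma cut_premise_side_labels k tk c : nth_error [TL; TR] k = Some tk ->
  concl tk = (G, Box c :: Box b :: D) ->
  label_list cut_tree [k] LL 0 G = label_G /\ label_list cut_tree [k] RR 2 D = label_D /\
  label_form (Box b) (fun p => fam cut_tree (Occ [k] RR 1 p)) = LBox cut_family label_B.
Proof.
  intros Hk Ec. assert (Hs : subtree cut_tree [] = Some cut_tree) by reflexivity.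
  assert (k2 : k < 2) by (change 2 with (length [TL; TR]); apply nth_error_Some; congruence).
  split; [|split].
  - apply label_list_ext. intros j g p x Hj Hq. eapply fam_step with (addr := []) (k := k) (tk := tk);
      [exact Hs|exact Hk|apply dc_cut_G; lia|rewrite Ec; exact Hj|exact Hq|exact Hj|exact Hq].
  - apply label_list_ext. intros j g p x Hj Hq. eapply fam_step with (addr := []) (k := k) (tk := tk);
      [exact Hs|exact Hk|apply dc_cut_D; lia|rewrite Ec; exact Hj|exact Hq|exact Hj|exact Hq].
  - change (LBox cut_family label_B) with (label_form (Box b) (fun p => fam cut_tree (Occ [] RR 0 p))).
    apply label_form_ext. intros p x Hq. eapply fam_step with (addr := []) (k := k) (tk := tk);
      [exact Hs|exact Hk|apply dc_cut_BB; lia|rewrite Ec; reflexivity|exact Hq|reflexivity|exact Hq].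
Qed.

Hypothesis eL : concl TL = (G, Box a :: Box b :: D).
Hypothesis eR : concl TR = (G, Box (Imp a b) :: Box b :: D).

Lemma labelled_left_premise : labelled_derivable cut_tree [0] (concl TL) ->
  der Fam (fam_order cut_tree) label_G (LBox cut_family label_A :: LBox cut_family label_B :: label_D).
Proof.
  unfold labelled_derivable. rewrite eL. cbn [fst snd label_list].
  destruct (cut_premise_side_labels 0 TL a eq_refl eL) as [-> [-> ->]].
  replace (label_form (Box a) _) with (LBox cut_family label_A); auto.
  simpl. f_equal. symmetry. eapply fam_step with (addr := []) (k := 0) (tk := TL) (x := a) (x' := b);
    [reflexivity|reflexivity|apply dc_cut_box; lia|rewrite eL; reflexivity|reflexivity|reflexivity|reflexivity].
Qed.

Lemma labelled_right_premise : labelled_derivable cut_tree [1] (concl TR) ->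
  der Fam (fam_order cut_tree) label_G
    (LBox cut_family (LImp label_A label_B) :: LBox cut_family label_B :: label_D).
Proof.
  unfold labelled_derivable. rewrite eR. cbn [fst snd label_list].
  destruct (cut_premise_side_labels 1 TR (Imp a b) eq_refl eR) as [-> [-> ->]].
  replace (label_form (Box (Imp a b)) _) with (LBox cut_family (LImp label_A label_B)); auto.
  simpl. f_equal; [|f_equal].
  - symmetry. eapply fam_step with (addr := []) (k := 1) (tk := TR) (x := Imp a b) (x' := b);
      [reflexivity|reflexivity|apply dc_cut_box; lia|rewrite eR; reflexivity|reflexivity|reflexivity|reflexivity].
  - (* the special correspondence of (Box Cut) between the two copies of A *)
    unfold label_A. apply label_form_ext. intros p x Hq. apply fam_corr. apply rst_step.
    split; [|split].
    + eapply (box_occ_intro cut_tree [0] TL); [reflexivity|rewrite eL; reflexivity|exact Hq].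
    + eapply (box_occ_intro cut_tree [1] TR); [reflexivity|rewrite eR; reflexivity|exact Hq].
    + exists [], (BoxCut a), (G, Box b :: D), [TL; TR]. split; auto. right. exists a, p. auto.
  - unfold label_B. apply label_form_ext. intros p x Hq. symmetry.
    eapply fam_step with (addr := []) (k := 1) (tk := TR);
      [reflexivity|reflexivity|apply dc_cut_B|rewrite eR; reflexivity|exact Hq|reflexivity|exact Hq].
Qed.

End FinalCut.

Lemma erase_cut_conclusion G D a b TL TR :
  erase_seq Fam (label_G G D a b TL TR,
                 LBox (cut_family G D a b TL TR) (label_B G D a b TL TR) :: label_D G D a b TL TR)
  = (G, Box b :: D).
Proof.
  unfold erase_seq, label_G, label_D, label_B. simpl. rewrite !erase_label_list, erase_label_form. auto.
Qed.

Theorem mainTheorem5 (G D : list form) (a b : form) (TL TR : ptree) :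
  valid TL -> cutfree TL -> concl TL = (G, Box a :: Box b :: D) ->
  valid TR -> cutfree TR -> concl TR = (G, Box (Imp a b) :: Box b :: D) ->
  pcfree (PT (BoxCut a) (G, Box b :: D) [TL; TR]) ->
  exists T, valid T /\ cutfree T /\ concl T = (G, Box b :: D) /\ pcfree T.
Proof.
  intros vL cL eL vR cR eR Hp.
  set (Tc := cut_tree G D a b TL TR).
  pose proof (labelled_left_premise G D a b TL TR eL (input_der Tc TL [0] eq_refl vL cL)) as XL.
  pose proof (labelled_right_premise G D a b TL TR eL eR (input_der Tc TR [1] eq_refl vR cR)) as XR.
  assert (Rt : forall x y z, fam_order Tc x y -> fam_order Tc y z -> fam_order Tc x z)
    by (intros; eapply t_trans; eauto).
  pose proof (boxcut_adm Fam (fam_order Tc) Rt _ _ _ _ _ XL XR) as X.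
  destruct (der_to_lpt _ _ _ _ X) as [t [Hv Hc]].
  exists (erase Fam t). split; [|split; [|split]].
  - apply (valid_erase Fam (fam_order Tc)); auto.
  - apply (cutfree_erase Fam (fam_order Tc)); auto.
  - rewrite concl_erase, Hc. apply erase_cut_conclusion.
  - apply (pcfree_erase Fam (fam_order Tc)); auto. apply fam_order_irrefl. exact Hp.
Qed.
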